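(* Let $\alpha_1,\alpha_2,\beta_2,\beta_3,\beta_4,\delta_1,\delta_2,\delta_4>0$, $\rho>0$, and $i\in C(\mathbb{R}_+,[0,i_M])$ $\rho$-periodic with $\frac1\rho\int_0^\rho i=1$. Consider the system $$u_1'=u_1(1-u_1-\alpha_1u_2-\delta_1u_3),\quad u_2'=\beta_2u_2(1-u_2-\alpha_2u_1-\delta_2u_4),\quad u_3'=\beta_3(u_2-u_3),\quad u_4'=\beta_4(i(t)-u_4-\delta_4u_4u_2).$$ Let $w$ be the unique $\rho$-periodic solution of $w'=\beta_4(i(t)-w)$. Then $(1,0,0,w(t))$ is a $\rho$-periodic solution of the system; it is (uniformly) asymptotically stable if $\alpha_2+\delta_2>1$ and unstable if $\alpha_2+\delta_2<1$.
   Context: $\mathbb{R}_+=[0,\infty)$. Stability/instability is in the Lyapunov sense. *)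

From Stdlib Require Import Reals List.
From Coquelicot Require Import Coquelicot.
Open Scope R_scope.

Definition state := (R * R * R * R)%type.
Definition c1 (x : state) : R := let '(a, _, _, _) := x in a.
Definition c2 (x : state) : R := let '(_, a, _, _) := x in a.
Definition c3 (x : state) : R := let '(_, _, a, _) := x in a.
Definition c4 (x : state) : R := let '(_, _, _, a) := x in a.
Definition comps : list (state -> R) := c1 :: c2 :: c3 :: c4 :: nil.

(* max-norm distance on R^4 (all norms on R^4 are equivalent) *)
Definition ndist (x y : state) : R :=
  Rmax (Rmax (Rabs (c1 x - c1 y)) (Rabs (c2 x - c2 y)))
       (Rmax (Rabs (c3 x - c3 y)) (Rabs (c4 x - c4 y))).

Definition is_sol (f : R -> state -> state) (t0 : R) (T : Rbar) (x : R -> state) : Prop :=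
  forall c, In c comps ->
    (forall t, t0 < t -> Rbar_lt t T -> is_derive (fun s => c (x s)) t (c (f t (x t)))) /\
    filterlim (fun s => c (x s)) (at_right t0) (locally (c (x t0))).

Definition lyap_stable (f : R -> state -> state) (p : R -> state) : Prop :=
  forall eps, 0 < eps -> forall t0, 0 <= t0 -> exists delta, 0 < delta /\
    forall x0, ndist x0 (p t0) < delta ->
      (exists x, is_sol f t0 p_infty x /\ x t0 = x0) /\
      (forall x, is_sol f t0 p_infty x -> x t0 = x0 ->
         forall t, t0 <= t -> ndist (x t) (p t) < eps).

Definition unif_stable (f : R -> state -> state) (p : R -> state) : Prop :=
  forall eps, 0 < eps -> exists delta, 0 < delta /\ forall t0, 0 <= t0 ->
    forall x0, ndist x0 (p t0) < delta ->
      (exists x, is_sol f t0 p_infty x /\ x t0 = x0) /\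
      (forall x, is_sol f t0 p_infty x -> x t0 = x0 ->
         forall t, t0 <= t -> ndist (x t) (p t) < eps).

Definition unif_asym_stable (f : R -> state -> state) (p : R -> state) : Prop :=
  unif_stable f p /\
  exists eta, 0 < eta /\
    (forall t0 x0, 0 <= t0 -> ndist x0 (p t0) < eta ->
       exists x, is_sol f t0 p_infty x /\ x t0 = x0) /\
    (forall eps, 0 < eps -> exists T, 0 < T /\
       forall t0, 0 <= t0 -> forall x, is_sol f t0 p_infty x ->
         ndist (x t0) (p t0) < eta ->
         forall t, t0 + T <= t -> ndist (x t) (p t) < eps).

Definition lyap_unstable (f : R -> state -> state) (p : R -> state) : Prop :=
  ~ lyap_stable f p.

Definition sysF (a1 a2 b2 b3 b4 d1 d2 d4 : R) (i : R -> R) (t : R) (x : state) : state :=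
  let '(u1, u2, u3, u4) := x in
  (u1 * (1 - u1 - a1 * u2 - d1 * u3),
   b2 * u2 * (1 - u2 - a2 * u1 - d2 * u4),
   b3 * (u2 - u3),
   b4 * (i t - u4 - d4 * u4 * u2)).

(* Near [p = (1, 0, 0, w)] the decisive coordinate is [u2].  Along a solution
   [(ln u2)' = b2 (1 - u2 - a2 u1 - d2 u4)] and [u4' = b4 (i - u4 - d4 u4 u2)], so the weight
   [phi = - (b2 d2 / b4) u4 + b2 d2 (int_0^t i - t)] gives
   [(ln u2 + phi)' = b2 (1 - a2 - d2) + O (|x - p|)].  The input only enters [phi] through
   [int_0^t (i - 1)], which is periodic since [i] has mean 1, hence bounded, and so is [u4].
   Thus [u2^2 exp (2 phi)] decays exponentially when [a2 + d2 > 1] and grows exponentially when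
   [a2 + d2 < 1], at rates independent of the initial time.  In the first case [u3], [u1 - 1] and
   [u4 - w] obey linear differential inequalities forced by [u2^2] and decay too, and a continuity
   argument keeps the solution in the neighbourhood where these estimates hold.  Solutions near [p]
   exist because [F] agrees there with a globally Lipschitz, bounded field, to which Picard
   iteration applies. *)

From Pilot Require Import Defs.
From Stdlib Require Import Reals List Lra Psatz Classical_Prop.
From Coquelicot Require Import Coquelicot.
Open Scope R_scope.
(* Coquelicot also exports a [c1]; the state projections must take precedence. *)
Import Defs.

Lemma ball_R (x y e : R) : ball x e y <-> Rabs (y - x) < e.
Proof. unfold ball; simpl; unfold AbsRing_ball, abs, minus, plus, opp; simpl. tauto. Qed.

(** * Limits and differential inequalities *)

Section Limits.
Context {T : Type} {F : (T -> Prop) -> Prop} {FF : Filter F}.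

Lemma lim_plus (f g : T -> R) a b :
  filterlim f F (locally a) -> filterlim g F (locally b) ->
  filterlim (fun s => f s + g s) F (locally (a + b)).
Proof.
  intros Hf Hg. eapply filterlim_comp_2; [exact Hf|exact Hg|].
  exact (@filterlim_plus R_AbsRing R_NormedModule a b).
Qed.

Lemma lim_mult (f g : T -> R) a b :
  filterlim f F (locally a) -> filterlim g F (locally b) ->
  filterlim (fun s => f s * g s) F (locally (a * b)).
Proof.
  intros Hf Hg. eapply filterlim_comp_2; [exact Hf|exact Hg|].
  exact (@filterlim_mult R_AbsRing a b).
Qed.

Lemma lim_comp (f : T -> R) (h : R -> R) a :
  filterlim f F (locally a) -> continuous h a ->
  filterlim (fun s => h (f s)) F (locally (h a)).
Proof. intros Hf Hh. eapply filterlim_comp; eauto. Qed.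

Lemma lim_minus (f g : T -> R) a b :
  filterlim f F (locally a) -> filterlim g F (locally b) ->
  filterlim (fun s => f s - g s) F (locally (a - b)).
Proof.
  intros Hf Hg. apply lim_plus; auto. apply (lim_comp g Ropp b Hg).
  exact (@filterlim_opp R_AbsRing R_NormedModule b).
Qed.

Lemma lim_Rabs (f : T -> R) a :
  filterlim f F (locally a) -> filterlim (fun s => Rabs (f s)) F (locally (Rabs a)).
Proof. intros Hf. apply (lim_comp f Rabs); auto. apply continuous_Rabs. Qed.

Lemma Rmax_eq_abs x y : Rmax x y = (x + y + Rabs (x - y)) / 2.
Proof. unfold Rmax, Rabs. destruct (Rle_dec x y); destruct (Rcase_abs (x - y)); lra. Qed.

Lemma lim_Rmax (f g : T -> R) a b :
  filterlim f F (locally a) -> filterlim g F (locally b) ->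
  filterlim (fun s => Rmax (f s) (g s)) F (locally (Rmax a b)).
Proof.
  intros Hf Hg. rewrite Rmax_eq_abs.
  apply (filterlim_ext (fun s => (f s + g s + Rabs (f s - g s)) * / 2)).
  { intros; rewrite Rmax_eq_abs; reflexivity. }
  apply lim_mult; [|apply filterlim_const].
  apply lim_plus; [apply lim_plus; auto|]. apply lim_Rabs, lim_minus; auto.
Qed.
End Limits.

Definition right_cont (f : R -> R) (t0 : R) := filterlim f (at_right t0) (locally (f t0)).

Lemma right_cont_of_continuous f t : continuous f t -> right_cont f t.
Proof. intros H. eapply filterlim_filter_le_1; [apply filter_le_within|exact H]. Qed.

Lemma right_cont_eps f t0 : right_cont f t0 -> forall eps, 0 < eps -> exists d, 0 < d /\
  forall y, t0 < y < t0 + d -> Rabs (f y - f t0) < eps.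
Proof.
  intros H eps Heps. destruct (proj1 (filterlim_locally _ _) H (mkposreal eps Heps)) as [d Hd].
  exists d; split; [apply cond_pos|]. intros y Hy. apply ball_R. apply Hd; [|lra].
  apply ball_R. rewrite Rabs_right; lra.
Qed.

Lemma continuous_eps f t : continuous f t -> forall eps, 0 < eps -> exists d, 0 < d /\
  forall y, Rabs (y - t) < d -> Rabs (f y - f t) < eps.
Proof.
  intros H eps Heps. destruct (proj1 (filterlim_locally _ _) H (mkposreal eps Heps)) as [d Hd].
  exists d; split; [apply cond_pos|]. intros y Hy. apply ball_R, Hd, ball_R, Hy.
Qed.

Lemma right_cont_of_eps f t0 : (forall eps, 0 < eps -> exists d, 0 < d /\
  forall y, t0 < y < t0 + d -> Rabs (f y - f t0) < eps) -> right_cont f t0.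
Proof.
  intros H. apply filterlim_locally. intros [eps Heps].
  destruct (H eps Heps) as [d [Hd Hdd]]. exists (mkposreal d Hd). intros y Hy Hy2.
  pose proof (proj1 (ball_R t0 y d) Hy) as Hy3. apply ball_R, Hdd.
  apply Rabs_lt_between in Hy3. lra.
Qed.

Lemma continuous_of_eps f t : (forall eps, 0 < eps -> exists d, 0 < d /\
  forall y, Rabs (y - t) < d -> Rabs (f y - f t) < eps) -> continuous f t.
Proof.
  intros H. apply filterlim_locally. intros [eps Heps].
  destruct (H eps Heps) as [d [Hd Hdd]]. exists (mkposreal d Hd). intros y Hy.
  apply ball_R in Hy. apply ball_R, Hdd, Hy.
Qed.

Lemma continuous_of_lipschitz f k : 0 <= k -> (forall y z, Rabs (f y - f z) <= k * Rabs (y - z)) ->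
  forall t, continuous f t.
Proof.
  intros Hk Hf t. apply continuous_of_eps. intros eps Heps.
  exists (eps / (k + 1)). split; [apply Rdiv_lt_0_compat; lra|]. intros y Hy.
  eapply Rle_lt_trans; [apply Hf|].
  assert (k * Rabs (y - t) <= k * (eps / (k + 1))) by (apply Rmult_le_compat_l; lra).
  assert (k * (eps / (k + 1)) < eps).
  { apply (Rmult_lt_reg_r (k + 1)); [lra|].
    replace (k * (eps / (k + 1)) * (k + 1)) with (k * eps) by (field; lra). nra. }
  lra.
Qed.

Lemma is_derive_eq (f : R -> R) (x l1 l2 : R) : is_derive f x l1 -> l1 = l2 -> is_derive f x l2.
Proof. intros H ->; exact H. Qed.

Lemma is_derive_Rmult (f g : R -> R) (x df dg : R) : is_derive f x df -> is_derive g x dg ->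
  is_derive (fun s => f s * g s) x (df * g x + f x * dg).
Proof. intros Hf Hg. apply (is_derive_mult f g x df dg Hf Hg). intros; apply Rmult_comm. Qed.

Lemma is_derive_sqr (f : R -> R) (x df : R) : is_derive f x df ->
  is_derive (fun s => f s * f s) x (2 * f x * df).
Proof. intros Hf. eapply is_derive_eq; [apply (is_derive_Rmult f f x df df Hf Hf)|ring]. Qed.

Lemma is_derive_exp_comp (f : R -> R) (x df : R) : is_derive f x df ->
  is_derive (fun s => exp (f s)) x (df * exp (f x)).
Proof. intros Hf. exact (is_derive_comp exp f x _ _ (is_derive_exp (f x)) Hf). Qed.

Lemma is_derive_exp_shift a t0 s : is_derive (fun s => exp (a * (s - t0))) s (a * exp (a * (s - t0))).
Proof. auto_derive; auto. unfold Rminus; ring. Qed.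

Lemma continuous_exp_shift a t0 s : continuous (fun s => exp (a * (s - t0))) s.
Proof. apply (@ex_derive_continuous R_AbsRing R_NormedModule). eexists; apply is_derive_exp_shift. Qed.

Lemma exp_le_compat x y : x <= y -> exp x <= exp y.
Proof. intros [H|H]; [left; apply exp_increasing; auto|subst; lra]. Qed.

Lemma exp_le_1 x : x <= 0 -> exp x <= 1.
Proof. intros H. rewrite <- exp_0. apply exp_le_compat, H. Qed.

Lemma nonincreasing_of_derive_nonpos (f df : R -> R) t0 t : t0 <= t ->
  (forall s, t0 < s <= t -> is_derive f s (df s)) ->
  (forall s, t0 < s < t -> df s <= 0) -> right_cont f t0 -> f t <= f t0.
Proof.
  intros Ht Hder Hn Hrc. destruct (Req_dec t0 t) as [->|Hne]; [lra|].
  apply Rnot_lt_le; intro Hlt.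
  destruct (right_cont_eps f t0 Hrc (f t - f t0) ltac:(lra)) as [d [Hd0 Hd]].
  set (s := Rmin (t0 + d/2) ((t0 + t)/2)).
  assert (Hs1 : t0 < s) by (unfold s; apply Rmin_case; lra).
  assert (Hs2 : s < t) by (unfold s; apply Rmin_case_strong; intros; lra).
  assert (Hs3 : s < t0 + d) by (unfold s; apply Rmin_case_strong; intros; lra).
  specialize (Hd s ltac:(lra)).
  destruct (MVT_cor2 f df s t Hs2) as [c [Hc1 Hc2]].
  { intros c Hc. apply is_derive_Reals, Hder. lra. }
  assert (df c * (t - s) <= 0) by (apply Rmult_le_0_r; [apply Hn|]; lra).
  apply Rabs_lt_between in Hd. lra.
Qed.

Lemma eq_of_derive_zero (f : R -> R) t0 t : t0 <= t ->
  (forall s, t0 < s <= t -> is_derive f s 0) -> right_cont f t0 -> f t = f t0.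
Proof.
  intros Ht Hd Hrc.
  assert (f t <= f t0) by (apply (nonincreasing_of_derive_nonpos f (fun _ => 0) t0 t); auto; intros; lra).
  assert (- f t <= - f t0).
  { apply (nonincreasing_of_derive_nonpos (fun s => - f s) (fun _ => - 0) t0 t); auto.
    - intros s Hs. apply (is_derive_opp f), Hd, Hs.
    - intros; lra.
    - apply (lim_comp f Ropp _ Hrc). exact (@filterlim_opp R_AbsRing R_NormedModule _). }
  lra.
Qed.

(* Multiplying by the integrating factor [exp (a (s - t0))] reduces this to monotonicity. *)
Lemma exp_decay_of_derive_le (W dW : R -> R) a t0 t : t0 <= t ->
  (forall s, t0 < s <= t -> is_derive W s (dW s)) ->
  (forall s, t0 < s < t -> dW s <= - a * W s) ->
  right_cont W t0 -> W t <= W t0 * exp (- a * (t - t0)).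
Proof.
  intros Ht Hd Hn Hrc.
  pose (U := fun s => W s * exp (a * (s - t0))).
  assert (HU : U t <= U t0).
  { apply (nonincreasing_of_derive_nonpos U
      (fun s => dW s * exp (a * (s - t0)) + W s * (a * exp (a * (s - t0)))) t0 t Ht).
    - intros s Hs. apply (is_derive_Rmult W (fun s => exp (a * (s - t0)))); [auto|apply is_derive_exp_shift].
    - intros s Hs. specialize (Hn s Hs). pose proof (exp_pos (a * (s - t0))).
      assert (dW s + a * W s <= 0) by lra. nra.
    - apply lim_mult; [exact Hrc|].
      apply (right_cont_of_continuous (fun s => exp (a * (s - t0)))), continuous_exp_shift. }
  unfold U in HU. replace (t0 - t0) with 0 in HU by ring. rewrite Rmult_0_r, exp_0, Rmult_1_r in HU.
  replace (W t) with (W t * exp (a * (t - t0)) * exp (- a * (t - t0))).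
  2:{ rewrite Rmult_assoc, <- exp_plus. replace (a * (t - t0) + - a * (t - t0)) with 0 by ring.
      rewrite exp_0; ring. }
  apply Rmult_le_compat_r; [left; apply exp_pos|exact HU].
Qed.

Lemma exp_growth_of_derive_ge (Z dZ : R -> R) a t0 t : t0 <= t ->
  (forall s, t0 < s <= t -> is_derive Z s (dZ s)) ->
  (forall s, t0 < s < t -> a * Z s <= dZ s) ->
  right_cont Z t0 -> Z t0 * exp (a * (t - t0)) <= Z t.
Proof.
  intros Ht Hd Hn Hrc.
  assert (H : - Z t <= - Z t0 * exp (- - a * (t - t0))).
  { apply (exp_decay_of_derive_le (fun s => - Z s) (fun s => - dZ s) (- a) t0 t Ht).
    - intros; apply (is_derive_opp Z); auto.
    - intros s Hs; specialize (Hn s Hs); lra.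
    - apply (lim_comp Z Ropp _ Hrc). exact (@filterlim_opp R_AbsRing R_NormedModule _). }
  replace (- - a) with a in H by ring. lra.
Qed.

(* The comparison function is [V - k exp (- beta (s - t0))] with [k = c / (a - beta)]. *)
Lemma exp_decay_of_derive_le_forced (V dV : R -> R) a c beta t0 t :
  0 < beta < a -> 0 <= c -> t0 <= t -> 0 <= V t0 ->
  (forall s, t0 < s <= t -> is_derive V s (dV s)) ->
  (forall s, t0 < s < t -> dV s <= - a * V s + c * exp (- beta * (s - t0))) ->
  right_cont V t0 -> V t <= (V t0 + c / (a - beta)) * exp (- beta * (t - t0)).
Proof.
  intros Hb Hc Ht HV0 Hd Hn Hrc.
  set (k := c / (a - beta)).
  assert (Hk : 0 <= k) by (unfold k; apply Rdiv_le_0_compat; lra).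
  pose (W := fun s => V s - k * exp (- beta * (s - t0))).
  assert (HW : W t <= W t0 * exp (- a * (t - t0))).
  { apply (exp_decay_of_derive_le W (fun s => dV s - k * (- beta * exp (- beta * (s - t0)))) a t0 t Ht).
    - intros s Hs. apply (is_derive_minus V (fun s => k * exp (- beta * (s - t0)))); [auto|].
      apply (is_derive_scal (fun s => exp (- beta * (s - t0)))), is_derive_exp_shift.
    - intros s Hs. specialize (Hn s Hs). unfold W.
      assert (E : c = k * (a - beta)) by (unfold k; field; lra).
      rewrite E in Hn. nra.
    - apply lim_minus; [exact Hrc|]. apply lim_mult; [apply filterlim_const|].
      apply (right_cont_of_continuous (fun s => exp (- beta * (s - t0)))), continuous_exp_shift. }
  unfold W in HW. replace (t0 - t0) with 0 in HW by ring. rewrite Rmult_0_r, exp_0 in HW.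
  assert (E1 : exp (- a * (t - t0)) <= exp (- beta * (t - t0))) by (apply exp_le_compat; nra).
  pose proof (exp_pos (- a * (t - t0))). pose proof (exp_pos (- beta * (t - t0))).
  destruct (Rle_dec 0 (V t0 - k * 1)); nra.
Qed.

Lemma right_cont_lt g S r : right_cont g S -> g S < r ->
  exists d, 0 < d /\ forall y, S <= y < S + d -> g y < r.
Proof.
  intros Hrc Hg. destruct (right_cont_eps g S Hrc (r - g S) ltac:(lra)) as [d [Hd Hdd]].
  exists d; split; auto. intros y Hy. destruct (Req_dec y S) as [->|]; [lra|].
  specialize (Hdd y ltac:(lra)). apply Rabs_lt_between in Hdd. lra.
Qed.

(* Take the supremum [S] of the times up to which [g <= r]; continuity on both sides of [S]
   shows that [g <= r] still holds a little beyond [S]. *)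
Lemma continuity_bootstrap g t0 r : 0 < r ->
  right_cont g t0 -> (forall s, t0 < s -> continuous g s) -> g t0 < r ->
  (forall T, t0 <= T -> (forall s, t0 <= s <= T -> g s <= r) -> forall s, t0 <= s <= T -> g s <= r/2) ->
  forall t, t0 <= t -> g t <= r/2.
Proof.
  intros Hr Hrc Hct Hg0 Hyp t Ht. apply Rnot_lt_le; intro Hbad.
  pose (E := fun T => t0 <= T /\ forall s, t0 <= s <= T -> g s <= r).
  assert (HEub : forall T, E T -> T < t).
  { intros T [HT1 HT2]. apply Rnot_le_lt; intro. assert (g t <= r/2) by (apply (Hyp T); auto; lra). lra. }
  assert (HE0 : E t0) by (split; [lra|]; intros s Hs; replace s with t0 by lra; lra).
  destruct (completeness E) as [S [HSub HSlub]].
  { exists t. intros T HT. left. apply HEub; auto. }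
  { exists t0; auto. }
  assert (HS0 : t0 <= S) by (apply HSub; auto).
  assert (Hbelow : forall s, t0 <= s < S -> g s <= r/2).
  { intros s Hs. destruct (classic (exists T, E T /\ s < T)) as [[T [[HT1 HT2] Hs2]]|Hno].
    - apply (Hyp T HT1 HT2). lra.
    - assert (S <= s) by (apply HSlub; intros T HT; apply Rnot_lt_le; intro; apply Hno; eauto).
      lra. }
  assert (HES : E S).
  { split; [lra|]. intros s Hs. destruct (Rlt_dec s S) as [Hlt|Hge]; [specialize (Hbelow s ltac:(lra)); lra|].
    replace s with S by lra. destruct (Req_dec S t0) as [->|HSne]; [lra|].
    apply Rnot_lt_le; intro HgS.
    destruct (continuous_eps g S (Hct S ltac:(lra)) (g S - r/2) ltac:(lra)) as [d [Hd Hdd]].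
    set (s' := Rmax t0 (S - d/2)).
    assert (Hs1 : t0 <= s') by apply Rmax_l.
    assert (Hs2 : s' < S) by (unfold s'; apply Rmax_case_strong; intros; lra).
    assert (Hs3 : Rabs (s' - S) < d) by (unfold s'; apply Rmax_case_strong; intros; rewrite Rabs_left; lra).
    specialize (Hdd s' Hs3). specialize (Hbelow s' ltac:(lra)). apply Rabs_lt_between in Hdd. lra. }
  assert (HS2 : g S <= r/2) by (apply (Hyp S HS0 (proj2 HES)); lra).
  assert (HrcS : right_cont g S)
    by (destruct (Req_dec S t0) as [->|]; [exact Hrc|apply right_cont_of_continuous, Hct; lra]).
  destruct (right_cont_lt g S r HrcS ltac:(lra)) as [d [Hd Hdd]].
  assert (E (S + d/2)).
  { split; [lra|]. intros s Hs. destruct (Rle_dec s S); [apply (proj2 HES); lra|left; apply Hdd; lra]. }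
  assert (S + d/2 <= S) by (apply HSub; auto). lra.
Qed.

(** * Integrals and Picard iteration *)

Definition cont_everywhere (f : R -> R) := forall s, continuous f s.

Lemma ex_RInt_cont_everywhere f a b : cont_everywhere f -> ex_RInt f a b.
Proof. intros H. apply (@ex_RInt_continuous R_CompleteNormedModule). intros; apply H. Qed.

Lemma is_derive_RInt_upper f a s : cont_everywhere f -> is_derive (fun t => RInt f a t) s (f s).
Proof.
  intros H. apply (is_derive_RInt f (fun t => RInt f a t) a s); [|apply H].
  exists (mkposreal 1 Rlt_0_1). intros; apply (@RInt_correct R_CompleteNormedModule), ex_RInt_cont_everywhere, H.
Qed.

Lemma cont_everywhere_RInt_upper f a : cont_everywhere f -> cont_everywhere (fun t => RInt f a t).
Proof. intros H s. apply (@ex_derive_continuous R_AbsRing R_NormedModule). eexists. apply is_derive_RInt_upper, H. Qed.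

Lemma cont_everywhere_minus f g : cont_everywhere f -> cont_everywhere g -> cont_everywhere (fun s => f s - g s).
Proof. intros Hf Hg s. apply lim_minus; [apply Hf|apply Hg]. Qed.

Lemma RInt_minus_upper f a s t : cont_everywhere f -> RInt f a s - RInt f a t = RInt f t s.
Proof.
  intros H. rewrite <- (RInt_Chasles f a t s) by (apply ex_RInt_cont_everywhere; auto).
  unfold plus; simpl. ring.
Qed.

Lemma RInt_minus_cont f g a b : cont_everywhere f -> cont_everywhere g ->
  RInt (fun s => f s - g s) a b = RInt f a b - RInt g a b.
Proof. intros Hf Hg. apply (RInt_minus f g a b); apply ex_RInt_cont_everywhere; auto. Qed.

Lemma abs_RInt_le_const_dist f a b M : cont_everywhere f -> (forall u, Rabs (f u) <= M) ->
  Rabs (RInt f a b) <= M * Rabs (b - a).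
Proof.
  intros H HM. destruct (Rle_dec a b).
  - rewrite (Rabs_right (b - a)), Rmult_comm by lra.
    apply abs_RInt_le_const; auto. apply ex_RInt_cont_everywhere; auto.
  - rewrite <- (opp_RInt_swap f b a) by (apply ex_RInt_cont_everywhere; auto). unfold opp; simpl.
    rewrite Rabs_Ropp, (Rabs_left (b - a)), Rmult_comm by lra. replace (- (b - a)) with (a - b) by ring.
    apply abs_RInt_le_const; [lra|apply ex_RInt_cont_everywhere; auto|auto].
Qed.

Lemma abs_RInt_le_RInt f g a b : cont_everywhere f -> cont_everywhere g -> a <= b ->
  (forall u, a <= u <= b -> Rabs (f u) <= g u) -> Rabs (RInt f a b) <= RInt g a b.
Proof.
  intros Hf Hg Hab H. eapply Rle_trans; [apply abs_RInt_le; auto; apply ex_RInt_cont_everywhere; auto|].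
  apply RInt_le; auto.
  - apply (@ex_RInt_continuous R_CompleteNormedModule). intros. apply continuous_Rabs_comp, Hf.
  - apply ex_RInt_cont_everywhere; auto.
  - intros; apply H; lra.
Qed.

Lemma RInt_exp_shift k t0 t : k <> 0 -> RInt (fun s => exp (k * (s - t0))) t0 t = (exp (k * (t - t0)) - 1) / k.
Proof.
  intros Hk. apply is_RInt_unique.
  replace ((exp (k * (t - t0)) - 1) / k) with (minus (exp (k * (t - t0)) / k) (exp (k * (t0 - t0)) / k)).
  2:{ unfold minus, plus, opp; simpl. replace (t0 - t0) with 0 by ring. rewrite Rmult_0_r, exp_0. field; auto. }
  apply (is_RInt_derive (fun s => exp (k * (s - t0)) / k)).
  - intros x _. eapply is_derive_eq.
    { apply (is_derive_Rmult (fun s => exp (k * (s - t0))) (fun _ => / k)).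
      apply is_derive_exp_shift. apply is_derive_const. }
    unfold zero; simpl. field; auto.
  - intros; apply continuous_exp_shift.
Qed.

Lemma INR_succ_le_pow2 n : INR n + 1 <= 2 ^ n.
Proof. induction n; [simpl; lra|]. rewrite S_INR. simpl. pose proof (pos_INR n). lra. Qed.

Lemma eq0_of_abs_le_div_pow2 a K : (forall n, Rabs a <= K / 2 ^ n) -> a = 0.
Proof.
  intros H. destruct (Req_dec a 0) as [|Ha]; auto. exfalso.
  assert (Hp : 0 < Rabs a) by (apply Rabs_pos_lt; auto).
  destruct (INR_unbounded (K / Rabs a)) as [n Hn].
  specialize (H n). pose proof (INR_succ_le_pow2 n). assert (0 < 2 ^ n) by (apply pow_lt; lra).
  apply (Rmult_le_compat_r (2 ^ n)) in H; [|lra].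
  unfold Rdiv in H. rewrite Rmult_assoc, Rinv_l, Rmult_1_r in H by lra.
  assert (K / Rabs a * Rabs a = K) by (field; lra). nra.
Qed.

Definition state_of (f : (state -> R) -> R) : state := (f c1, f c2, f c3, f c4).

Lemma comp_state_of f c : In c comps -> c (state_of f) = f c.
Proof. simpl. intros [<-|[<-|[<-|[<-|[]]]]]; reflexivity. Qed.

Lemma state_ext y z : (forall c, In c comps -> c y = c z) -> y = z.
Proof.
  destruct y as [[[y1 y2] y3] y4]; destruct z as [[[z1 z2] z3] z4]. intros H.
  pose proof (H c1 ltac:(simpl; auto)). pose proof (H c2 ltac:(simpl; auto)).
  pose proof (H c3 ltac:(simpl; auto)). pose proof (H c4 ltac:(simpl; auto)). simpl in *. subst. reflexivity.
Qed.

Lemma abs_comp_le_ndist y z c : In c comps -> Rabs (c y - c z) <= ndist y z.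
Proof.
  unfold ndist. simpl. intros [<-|[<-|[<-|[<-|[]]]]].
  - eapply Rle_trans; [apply Rmax_l|apply Rmax_l].
  - eapply Rle_trans; [apply Rmax_r|apply Rmax_l].
  - eapply Rle_trans; [apply Rmax_l|apply Rmax_r].
  - eapply Rle_trans; [apply Rmax_r|apply Rmax_r].
Qed.

Lemma ndist_nonneg y z : 0 <= ndist y z.
Proof. eapply Rle_trans; [apply Rabs_pos|apply (abs_comp_le_ndist y z c1); simpl; auto]. Qed.

Lemma ndist_le_of_comps y z e : (forall c, In c comps -> Rabs (c y - c z) <= e) -> ndist y z <= e.
Proof. intros H. unfold ndist. repeat apply Rmax_lub; apply H; simpl; auto. Qed.

Lemma Rabs_Rmax_sub_le a y z : Rabs (Rmax y a - Rmax z a) <= Rabs (y - z).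
Proof.
  unfold Rmax. destruct (Rle_dec y a); destruct (Rle_dec z a);
  unfold Rabs; repeat match goal with |- context [Rcase_abs ?x] => destruct (Rcase_abs x) end; lra.
Qed.

Lemma abs_lim_sub_le (u : nat -> R) (l a e : R) : is_lim_seq u l -> (forall m, Rabs (u m - a) <= e) ->
  Rabs (l - a) <= e.
Proof.
  intros Hu H. assert (Hl : is_lim_seq (fun m => Rabs (u m - a)) (Rabs (l - a))).
  { apply (is_lim_seq_abs _ (Finite (l - a))). apply is_lim_seq_minus'; auto. apply is_lim_seq_const. }
  exact (is_lim_seq_le _ _ _ _ H Hl (is_lim_seq_const e)).
Qed.

Section Picard.
Variable G : R -> state -> state.
Variables L M : R.
Hypothesis HL : 0 < L.
Hypothesis HM : 0 <= M.
Hypothesis G_lipschitz : forall c, In c comps -> forall s y z, Rabs (c (G s y) - c (G s z)) <= L * ndist y z.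
Hypothesis G_bounded : forall c, In c comps -> forall s y, Rabs (c (G s y)) <= M.
Hypothesis G_cont : forall X : R -> state, (forall c, In c comps -> cont_everywhere (fun s => c (X s))) ->
  forall c, In c comps -> cont_everywhere (fun s => c (G s (X s))).
Variable t0 : R.
Variable x0 : state.

Definition picard_step (X : R -> state) t := state_of (fun c => c x0 + RInt (fun s => c (G s (X s))) t0 t).

Fixpoint picard_iter n := match n with O => fun _ => x0 | S n => picard_step (picard_iter n) end.

Lemma picard_iter_S c n t : In c comps ->
  c (picard_iter (S n) t) = c x0 + RInt (fun s => c (G s (picard_iter n s))) t0 t.
Proof. intros Hc. simpl. unfold picard_step. rewrite comp_state_of; auto. Qed.

Lemma picard_iter_cont n : forall c, In c comps -> cont_everywhere (fun t => c (picard_iter n t)).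
Proof.
  induction n; intros c Hc s; [apply continuous_const|].
  apply (continuous_ext (fun t => c x0 + RInt (fun s => c (G s (picard_iter n s))) t0 t)).
  { intros; rewrite picard_iter_S; auto. }
  apply lim_plus; [apply filterlim_const|]. apply cont_everywhere_RInt_upper, G_cont; auto.
Qed.

Lemma G_picard_iter_cont n c : In c comps -> cont_everywhere (fun s => c (G s (picard_iter n s))).
Proof. intros Hc. apply G_cont; auto. apply picard_iter_cont. Qed.

Lemma picard_iter_t0 n c : In c comps -> c (picard_iter n t0) = c x0.
Proof.
  intros Hc. destruct n; [reflexivity|].
  rewrite picard_iter_S, RInt_point; auto. unfold zero; simpl; ring.
Qed.

Lemma picard_iter_lipschitz n c : In c comps ->
  forall s t, Rabs (c (picard_iter n s) - c (picard_iter n t)) <= M * Rabs (s - t).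
Proof.
  intros Hc s t. destruct n.
  - simpl. unfold Rminus; rewrite Rplus_opp_r, Rabs_R0. apply Rmult_le_pos; auto; apply Rabs_pos.
  - rewrite !picard_iter_S by auto.
    rewrite Rminus_plus_l_l.
    rewrite RInt_minus_upper by (apply G_picard_iter_cont; auto).
    apply abs_RInt_le_const_dist; [apply G_picard_iter_cont; auto|]. intros; apply G_bounded; auto.
Qed.

(* Chosen so that [L * int_t0^t picard_bound <= picard_bound t / 2]: each step halves the error. *)
Definition picard_bound t := M / (2 * L) * exp (2 * L * (t - t0)).

Lemma picard_bound_nonneg t : 0 <= picard_bound t.
Proof. unfold picard_bound. apply Rmult_le_pos; [apply Rdiv_le_0_compat; lra|left; apply exp_pos]. Qed.

Lemma picard_bound_le s t : s <= t -> picard_bound s <= picard_bound t.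
Proof.
  intros H. unfold picard_bound. apply Rmult_le_compat_l; [apply Rdiv_le_0_compat; lra|].
  apply exp_le_compat. nra.
Qed.

Lemma picard_iter_step_le n : forall t, t0 <= t -> forall c, In c comps ->
  Rabs (c (picard_iter (S n) t) - c (picard_iter n t)) <= picard_bound t / 2 ^ n.
Proof.
  induction n; intros t Ht c Hc.
  - rewrite picard_iter_S by auto. change (picard_iter 0 t) with x0.
    rewrite Rplus_minus_l.
    eapply Rle_trans.
    { apply abs_RInt_le_const_dist; [apply (G_picard_iter_cont 0); auto|]. intros; apply G_bounded; auto. }
    rewrite Rabs_right by lra. unfold picard_bound. pose proof (exp_ineq1_le (2 * L * (t - t0))).
    change (2 ^ 0) with 1. rewrite Rdiv_1.
    apply Rle_trans with (M / (2 * L) * (1 + 2 * L * (t - t0))).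
    + replace (M / (2 * L) * (1 + 2 * L * (t - t0))) with (M / (2 * L) + M * (t - t0)) by (field; lra).
      assert (0 <= M / (2 * L)) by (apply Rdiv_le_0_compat; lra). lra.
    + apply Rmult_le_compat_l; auto. apply Rdiv_le_0_compat; lra.
  - rewrite !picard_iter_S by auto.
    rewrite Rminus_plus_l_l.
    set (A0 := M / (2 * L)).
    assert (HA0 : 0 <= A0) by (unfold A0; apply Rdiv_le_0_compat; lra).
    rewrite <- RInt_minus_cont by (apply G_picard_iter_cont; auto).
    eapply Rle_trans.
    { apply (abs_RInt_le_RInt _ (fun s => (L / 2 ^ n * A0) * exp (2 * L * (s - t0)))); auto.
      - apply cont_everywhere_minus; apply G_picard_iter_cont; auto.
      - intro s. apply lim_mult; [apply filterlim_const|apply continuous_exp_shift].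
      - intros u Hu. eapply Rle_trans; [apply G_lipschitz; auto|].
        assert (ndist (picard_iter (S n) u) (picard_iter n u) <= picard_bound u / 2 ^ n)
          by (apply ndist_le_of_comps; intros; apply IHn; auto; lra).
        unfold picard_bound in H. fold A0 in H.
        replace (L / 2 ^ n * A0 * exp (2 * L * (u - t0))) with (L * (A0 * exp (2 * L * (u - t0)) / 2 ^ n))
          by (field; apply pow_nonzero; lra).
        apply Rmult_le_compat_l; lra. }
    rewrite (RInt_scal (V := R_CompleteNormedModule) (fun s => exp (2 * L * (s - t0))))
      by (apply ex_RInt_cont_everywhere; intro; apply continuous_exp_shift).
    unfold scal; simpl; unfold mult; simpl.
    rewrite RInt_exp_shift by lra. unfold picard_bound. fold A0. simpl.
    assert (0 < 2 ^ n) by (apply pow_lt; lra). pose proof (exp_pos (2 * L * (t - t0))).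
    replace (L / 2 ^ n * A0 * ((exp (2 * L * (t - t0)) - 1) / (2 * L))) with
      (A0 * exp (2 * L * (t - t0)) / (2 * 2 ^ n) - A0 / (2 * 2 ^ n)) by (field; lra).
    assert (0 <= A0 / (2 * 2 ^ n)) by (apply Rdiv_le_0_compat; lra). lra.
Qed.

Lemma picard_iter_cauchy n m t c : t0 <= t -> In c comps -> (n <= m)%nat ->
  Rabs (c (picard_iter m t) - c (picard_iter n t)) <= 2 * picard_bound t / 2 ^ n.
Proof.
  intros Ht Hc Hnm.
  assert (Hgeom : forall k, Rabs (c (picard_iter (n + k) t) - c (picard_iter n t))
                            <= 2 * picard_bound t / 2 ^ n - 2 * picard_bound t / 2 ^ (n + k)).
  { induction k.
    - rewrite Nat.add_0_r. unfold Rminus. rewrite !Rplus_opp_r, Rabs_R0. lra.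
    - replace (n + S k)%nat with (S (n + k)) by lia.
      replace (c (picard_iter (S (n + k)) t) - c (picard_iter n t)) with
        ((c (picard_iter (S (n + k)) t) - c (picard_iter (n + k) t))
         + (c (picard_iter (n + k) t) - c (picard_iter n t))) by ring.
      eapply Rle_trans; [apply Rabs_triang|].
      pose proof (picard_iter_step_le (n + k) t Ht c Hc).
      assert (0 < 2 ^ (n + k)) by (apply pow_lt; lra).
      replace (2 * picard_bound t / 2 ^ S (n + k)) with (picard_bound t / 2 ^ (n + k)) by (simpl; field; lra).
      lra. }
  replace m with (n + (m - n))%nat by lia.
  eapply Rle_trans; [apply Hgeom|].
  assert (0 < 2 ^ (n + (m - n))) by (apply pow_lt; lra). pose proof (picard_bound_nonneg t).
  assert (0 <= 2 * picard_bound t / 2 ^ (n + (m - n))) by (apply Rdiv_le_0_compat; lra). lra.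
Qed.

Lemma picard_iter_converges t c : t0 <= t -> In c comps -> ex_finite_lim_seq (fun n => c (picard_iter n t)).
Proof.
  intros Ht Hc. apply ex_lim_seq_cauchy_corr. intros [eps Heps]. simpl.
  pose proof (picard_bound_nonneg t).
  destruct (INR_unbounded (4 * picard_bound t / eps)) as [N HN].
  exists N. intros n m Hn Hm.
  replace (c (picard_iter n t) - c (picard_iter m t)) with
    ((c (picard_iter n t) - c (picard_iter N t)) - (c (picard_iter m t) - c (picard_iter N t))) by ring.
  eapply Rle_lt_trans; [apply Rabs_triang|]. rewrite Rabs_Ropp.
  pose proof (picard_iter_cauchy N n t c Ht Hc Hn). pose proof (picard_iter_cauchy N m t c Ht Hc Hm).
  pose proof (INR_succ_le_pow2 N). assert (0 < 2 ^ N) by (apply pow_lt; lra).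
  assert (4 * picard_bound t / 2 ^ N < eps).
  { apply (Rmult_lt_reg_r (2 ^ N)); auto. unfold Rdiv. rewrite Rmult_assoc, Rinv_l, Rmult_1_r by lra.
    assert (4 * picard_bound t / eps * eps = 4 * picard_bound t) by (field; lra). nra. }
  assert (2 * picard_bound t / 2 ^ N + 2 * picard_bound t / 2 ^ N = 4 * picard_bound t / 2 ^ N)
    by (field; lra).
  lra.
Qed.

(* The limit is taken at [max t t0], so that it is defined (and continuous) on all of [R]. *)
Definition picard_sol t := state_of (fun c => real (Lim_seq (fun n => c (picard_iter n (Rmax t t0))))).

Lemma picard_sol_lim t c : t0 <= t -> In c comps -> is_lim_seq (fun n => c (picard_iter n t)) (c (picard_sol t)).
Proof.
  intros Ht Hc. unfold picard_sol. rewrite comp_state_of, Rmax_left by auto.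
  destruct (picard_iter_converges t c Ht Hc) as [l Hl]. rewrite (is_lim_seq_unique _ _ Hl). exact Hl.
Qed.

Lemma picard_sol_close t c n : t0 <= t -> In c comps ->
  Rabs (c (picard_sol t) - c (picard_iter n t)) <= 2 * picard_bound t / 2 ^ n.
Proof.
  intros Ht Hc. pose proof (picard_sol_lim t c Ht Hc) as Hl.
  apply (is_lim_seq_incr_n _ n) in Hl.
  apply (abs_lim_sub_le _ _ _ _ Hl). intros m. apply picard_iter_cauchy; auto. lia.
Qed.

Lemma picard_sol_cont c : In c comps -> cont_everywhere (fun t => c (picard_sol t)).
Proof.
  intros Hc s. apply (continuous_of_lipschitz (fun t => c (picard_sol t)) M HM). intros y z.
  apply Rle_trans with (M * Rabs (Rmax y t0 - Rmax z t0));
    [|apply Rmult_le_compat_l; [exact HM|apply Rabs_Rmax_sub_le]].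
  assert (Hl : is_lim_seq (fun n => c (picard_iter n (Rmax y t0)) - c (picard_iter n (Rmax z t0)))
                          (c (picard_sol y) - c (picard_sol z))).
  { replace (picard_sol y) with (picard_sol (Rmax y t0))
      by (unfold picard_sol; rewrite (Rmax_left (Rmax y t0)) by apply Rmax_r; reflexivity).
    replace (picard_sol z) with (picard_sol (Rmax z t0))
      by (unfold picard_sol; rewrite (Rmax_left (Rmax z t0)) by apply Rmax_r; reflexivity).
    apply is_lim_seq_minus'; apply picard_sol_lim; auto; apply Rmax_r. }
  replace (c (picard_sol y) - c (picard_sol z)) with ((c (picard_sol y) - c (picard_sol z)) - 0) by ring.
  apply (abs_lim_sub_le _ _ _ _ Hl). intros m. rewrite Rminus_0_r. apply picard_iter_lipschitz; auto.
Qed.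

Lemma picard_sol_t0 : picard_sol t0 = x0.
Proof.
  apply state_ext. intros c Hc.
  pose proof (picard_sol_lim t0 c (Rle_refl _) Hc) as Hl.
  apply (is_lim_seq_ext _ (fun _ => c x0)) in Hl; [|intros; apply picard_iter_t0; auto].
  pose proof (is_lim_seq_unique _ _ Hl) as E. rewrite Lim_seq_const in E. injection E; auto.
Qed.

Lemma G_picard_sol_cont c : In c comps -> cont_everywhere (fun s => c (G s (picard_sol s))).
Proof. intros Hc. apply G_cont; auto. apply picard_sol_cont. Qed.

Lemma RInt_G_picard_close t c n : t0 <= t -> In c comps ->
  Rabs (RInt (fun s => c (G s (picard_iter n s))) t0 t - RInt (fun s => c (G s (picard_sol s))) t0 t)
  <= (t - t0) * (L * (2 * picard_bound t / 2 ^ n)).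
Proof.
  intros Ht Hc.
  rewrite <- RInt_minus_cont by (apply G_picard_iter_cont || apply G_picard_sol_cont; auto).
  eapply Rle_trans.
  { apply (abs_RInt_le_RInt _ (fun _ => L * (2 * picard_bound t / 2 ^ n))); auto.
    - apply cont_everywhere_minus; [apply G_picard_iter_cont|apply G_picard_sol_cont]; auto.
    - intro; apply continuous_const.
    - intros u Hu. eapply Rle_trans; [apply G_lipschitz; auto|]. apply Rmult_le_compat_l; [lra|].
      apply ndist_le_of_comps. intros c' Hc'. rewrite <- Rabs_Ropp.
      replace (- (c' (picard_iter n u) - c' (picard_sol u))) with (c' (picard_sol u) - c' (picard_iter n u))
        by ring.
      eapply Rle_trans; [apply picard_sol_close; auto; lra|].
      assert (0 < 2 ^ n) by (apply pow_lt; lra). pose proof (picard_bound_le u t ltac:(lra)).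
      unfold Rdiv. apply Rmult_le_compat_r; [left; apply Rinv_0_lt_compat; auto|lra]. }
  rewrite RInt_const. unfold scal; simpl; unfold mult; simpl. lra.
Qed.

Lemma picard_sol_fixpoint t c : t0 <= t -> In c comps ->
  c (picard_sol t) = c x0 + RInt (fun s => c (G s (picard_sol s))) t0 t.
Proof.
  intros Ht Hc.
  assert (Z : c (picard_sol t) - c x0 - RInt (fun s => c (G s (picard_sol s))) t0 t = 0).
  { apply (eq0_of_abs_le_div_pow2 _ (2 * picard_bound t + (t - t0) * (L * (2 * picard_bound t)))). intros n.
    replace (c (picard_sol t) - c x0 - RInt (fun s => c (G s (picard_sol s))) t0 t) with
      ((c (picard_sol t) - c (picard_iter (S n) t))
       + (RInt (fun s => c (G s (picard_iter n s))) t0 t - RInt (fun s => c (G s (picard_sol s))) t0 t))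
      by (rewrite (picard_iter_S c n t Hc); ring).
    eapply Rle_trans; [apply Rabs_triang|].
    pose proof (picard_sol_close t c (S n) Ht Hc) as B1.
    pose proof (RInt_G_picard_close t c n Ht Hc) as B2.
    assert (0 < 2 ^ n) by (apply pow_lt; lra). pose proof (picard_bound_nonneg t).
    assert (2 * picard_bound t / 2 ^ S n <= 2 * picard_bound t / 2 ^ n).
    { simpl. unfold Rdiv. apply Rmult_le_compat_l; [lra|]. apply Rinv_le_contravar; lra. }
    replace ((2 * picard_bound t + (t - t0) * (L * (2 * picard_bound t))) / 2 ^ n) with
      (2 * picard_bound t / 2 ^ n + (t - t0) * (L * (2 * picard_bound t / 2 ^ n))) by (field; lra).
    lra. }
  lra.
Qed.

Lemma picard_sol_derive s c : t0 < s -> In c comps ->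
  is_derive (fun t => c (picard_sol t)) s (c (G s (picard_sol s))).
Proof.
  intros Hs Hc.
  apply (is_derive_ext_loc (fun t => c x0 + RInt (fun s => c (G s (picard_sol s))) t0 t)).
  - exists (mkposreal (s - t0) ltac:(lra)). intros y Hy.
    pose proof (proj1 (ball_R _ _ _) Hy) as Hy2. simpl in Hy2. apply Rabs_lt_between in Hy2.
    symmetry. apply picard_sol_fixpoint; auto. lra.
  - eapply is_derive_eq.
    { apply (is_derive_plus (fun _ => c x0) (fun t => RInt (fun s => c (G s (picard_sol s))) t0 t)).
      - apply is_derive_const.
      - apply is_derive_RInt_upper, G_picard_sol_cont, Hc. }
    unfold zero, plus; simpl; ring.
Qed.
End Picard.

Lemma ex_solution_of_lipschitz_bounded (G : R -> state -> state) L M :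
  0 < L -> 0 <= M ->
  (forall c, In c comps -> forall s y z, Rabs (c (G s y) - c (G s z)) <= L * ndist y z) ->
  (forall c, In c comps -> forall s y, Rabs (c (G s y)) <= M) ->
  (forall X : R -> state, (forall c, In c comps -> cont_everywhere (fun s => c (X s))) ->
     forall c, In c comps -> cont_everywhere (fun s => c (G s (X s)))) ->
  forall (t0 : R) (x0 : state), exists X : R -> state, X t0 = x0 /\
    (forall c, In c comps -> cont_everywhere (fun s => c (X s))) /\
    (forall s, t0 < s -> forall c, In c comps -> is_derive (fun t => c (X t)) s (c (G s (X s)))).
Proof.
  intros HL HM Hlip Hbd Hcont t0 x0. exists (picard_sol G t0 x0). split; [|split].
  - apply (picard_sol_t0 G L M); auto.
  - intros; apply (picard_sol_cont G L M); auto.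
  - intros; apply (picard_sol_derive G L M); auto.
Qed.

Lemma sqr_le_of_abs_le a b : Rabs a <= b -> a * a <= b * b.
Proof. intros H. pose proof (Rabs_pos a). apply Rabs_le_between in H. nra. Qed.

Lemma abs_le_of_sqr_le a b : 0 <= b -> a * a <= b * b -> Rabs a <= b.
Proof. intros Hb H. apply Rabs_le. split; nra. Qed.

Lemma Rabs_mult_sub_le a b a' b' A B : Rabs a <= A -> Rabs b' <= B ->
  Rabs (a * b - a' * b') <= A * Rabs (b - b') + B * Rabs (a - a').
Proof.
  intros Ha Hb. replace (a * b - a' * b') with (a * (b - b') + b' * (a - a')) by ring.
  eapply Rle_trans; [apply Rabs_triang|]. rewrite !Rabs_mult.
  apply Rplus_le_compat; apply Rmult_le_compat; auto; try apply Rabs_pos; lra.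
Qed.

Lemma Rabs_triang3 a b c : Rabs (a + b + c) <= Rabs a + Rabs b + Rabs c.
Proof. eapply Rle_trans; [apply Rabs_triang|]. pose proof (Rabs_triang a b). lra. Qed.

Lemma abs_competition_le u v z a d B : 0 <= a -> 0 <= d ->
  Rabs u <= B -> Rabs v <= B -> Rabs z <= B ->
  Rabs (1 - u - a * v - d * z) <= 1 + B + a * B + d * B.
Proof.
  intros Ha Hd Hu Hv Hz.
  replace (1 - u - a * v - d * z) with (1 + - u + - (a * v) + - (d * z)) by ring.
  eapply Rle_trans; [apply Rabs_triang3|].
  eapply Rle_trans; [apply Rplus_le_compat_r, Rplus_le_compat_r, Rabs_triang|].
  rewrite !Rabs_Ropp, !Rabs_mult, Rabs_R1, (Rabs_right a), (Rabs_right d) by lra. nra.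
Qed.

Lemma abs_competition_sub_le u v z u' v' z' a d D : 0 <= a -> 0 <= d ->
  Rabs (u - u') <= D -> Rabs (v - v') <= D -> Rabs (z - z') <= D ->
  Rabs (1 - u - a * v - d * z - (1 - u' - a * v' - d * z')) <= (1 + a + d) * D.
Proof.
  intros Ha Hd Hu Hv Hz.
  replace (1 - u - a * v - d * z - (1 - u' - a * v' - d * z')) with
    (- (u - u') + - (a * (v - v')) + - (d * (z - z'))) by ring.
  eapply Rle_trans; [apply Rabs_triang3|].
  rewrite !Rabs_Ropp, !Rabs_mult, (Rabs_right a), (Rabs_right d) by lra. nra.
Qed.

Lemma abs_competition_prod_sub_le u v z u' v' z' a d B D : 0 <= a -> 0 <= d ->
  Rabs u <= B -> Rabs u' <= B -> Rabs v' <= B -> Rabs z' <= B ->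
  Rabs (u - u') <= D -> Rabs (v - v') <= D -> Rabs (z - z') <= D ->
  Rabs (u * (1 - u - a * v - d * z) - u' * (1 - u' - a * v' - d * z'))
  <= (B * (1 + a + d) + (1 + B + a * B + d * B)) * D.
Proof.
  intros Ha Hd Hu Hu' Hv' Hz' Eu Ev Ez.
  assert (0 <= B) by (eapply Rle_trans; [apply Rabs_pos|exact Hu]).
  eapply Rle_trans; [apply (Rabs_mult_sub_le _ _ _ _ B (1 + B + a * B + d * B)); auto;
    apply abs_competition_le; auto|].
  pose proof (abs_competition_sub_le u v z u' v' z' a d D Ha Hd Eu Ev Ez).
  apply Rle_trans with (B * ((1 + a + d) * D) + (1 + B + a * B + d * B) * D); [|right; ring].
  apply Rplus_le_compat; apply Rmult_le_compat_l; nra.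
Qed.

Lemma abs_uptake_sub_le k u v u' v' b d B D : 0 < b -> 0 < d ->
  Rabs u <= B -> Rabs v' <= B -> Rabs (u - u') <= D -> Rabs (v - v') <= D ->
  Rabs (b * (k - u - d * u * v) - b * (k - u' - d * u' * v')) <= b * (1 + 2 * d * B) * D.
Proof.
  intros Hb Hd Hu Hv' Eu Ev.
  assert (0 <= B) by (eapply Rle_trans; [apply Rabs_pos|exact Hu]).
  replace (b * (k - u - d * u * v) - b * (k - u' - d * u' * v')) with
    (b * (- (u - u') + - (d * (u * v - u' * v')))) by ring.
  rewrite Rabs_mult, (Rabs_right b), Rmult_assoc by lra. apply Rmult_le_compat_l; [lra|].
  pose proof (Rabs_mult_sub_le u v u' v' B B Hu Hv').
  assert (B * Rabs (v - v') <= B * D) by (apply Rmult_le_compat_l; lra).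
  assert (B * Rabs (u - u') <= B * D) by (apply Rmult_le_compat_l; lra).
  eapply Rle_trans; [apply Rabs_triang|]. rewrite !Rabs_Ropp, Rabs_mult, (Rabs_right d) by lra.
  assert (d * Rabs (u * v - u' * v') <= d * (B * D + B * D)) by (apply Rmult_le_compat_l; lra).
  nra.
Qed.

(* Young's inequality with weights [1/9] and [9], after writing [u1 = 1 + e1]. *)
Lemma logistic_energy_le e1 e2 e3 a1 d1 : Rabs e1 <= 1/2 ->
  2 * e1 * (1 + e1) * (- e1 - a1 * e2 - d1 * e3)
  <= -(1/2) * (e1 * e1) + 9 * (a1 * a1) * (e2 * e2) + 9 * (d1 * d1) * (e3 * e3).
Proof.
  intros H. apply Rabs_le_between in H. set (q := 1 + e1).
  assert (Hq : 1/2 <= q <= 3/2) by (unfold q; lra).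
  assert (A : - 2 * (q * e1) * (a1 * e2) <= (q * e1) * (q * e1) / 9 + 9 * (a1 * e2) * (a1 * e2)).
  { pose proof (Rle_0_sqr (q * e1 / 3 + 3 * (a1 * e2))). unfold Rsqr in *. nra. }
  assert (B : - 2 * (q * e1) * (d1 * e3) <= (q * e1) * (q * e1) / 9 + 9 * (d1 * e3) * (d1 * e3)).
  { pose proof (Rle_0_sqr (q * e1 / 3 + 3 * (d1 * e3))). unfold Rsqr in *. nra. }
  assert (C : (q * e1) * (q * e1) <= 9/4 * (e1 * e1)).
  { replace ((q * e1) * (q * e1)) with ((q * q) * (e1 * e1)) by ring. apply Rmult_le_compat_r; nra. }
  assert (D : - 2 * q * (e1 * e1) <= - (e1 * e1)) by nra.
  replace (2 * e1 * (1 + e1) * (- e1 - a1 * e2 - d1 * e3)) with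
    (- 2 * q * (e1 * e1) + (- 2 * (q * e1) * (a1 * e2)) + (- 2 * (q * e1) * (d1 * e3))) by (unfold q; ring).
  nra.
Qed.

Lemma linear_energy_le e b f : 0 < b -> 2 * e * (b * (f - e)) <= - b * (e * e) + b * (f * f).
Proof. intros H. pose proof (Rle_0_sqr (f - e)). unfold Rsqr in *. nra. Qed.

(** * The competition model *)

Section Model.
Variables a1 a2 b2 b3 b4 d1 d2 d4 rho iM : R.
Variables i w : R -> R.
Hypothesis Ha1 : 0 < a1.
Hypothesis Ha2 : 0 < a2.
Hypothesis Hb2 : 0 < b2.
Hypothesis Hb3 : 0 < b3.
Hypothesis Hb4 : 0 < b4.
Hypothesis Hd1 : 0 < d1.
Hypothesis Hd2 : 0 < d2.
Hypothesis Hd4 : 0 < d4.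
Hypothesis Hrho : 0 < rho.
Hypothesis Hi_cont : forall t, 0 <= t ->
  filterlim i (within (fun s => 0 <= s) (locally t)) (locally (i t)).
Hypothesis Hi_bound : forall t, 0 <= t -> 0 <= i t <= iM.
Hypothesis Hi_per : forall t, 0 <= t -> i (t + rho) = i t.
Hypothesis Hi_mean : RInt i 0 rho / rho = 1.
Hypothesis Hw_derive : forall t, 0 < t -> is_derive w t (b4 * (i t - w t)).
Hypothesis Hw_per : forall t, 0 <= t -> w (t + rho) = w t.

(* [i] extended to negative times by [i 0], to get a function continuous on all of [R]. *)
Definition iext (s : R) := i (Rmax s 0).

Lemma iext_eq s : 0 <= s -> iext s = i s.
Proof. intros. unfold iext. rewrite Rmax_left; auto. Qed.

Lemma iext_bound s : 0 <= iext s <= iM.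
Proof. apply Hi_bound, Rmax_r. Qed.

Lemma iext_cont : cont_everywhere iext.
Proof.
  intros s. apply continuous_of_eps. intros eps Heps. set (m := Rmax s 0).
  destruct (proj1 (filterlim_locally _ _) (Hi_cont m (Rmax_r _ _)) (mkposreal eps Heps)) as [d Hd].
  exists d; split; [apply cond_pos|]. intros y Hy.
  assert (H1 : Rabs (Rmax y 0 - m) < d) by (eapply Rle_lt_trans; [apply Rabs_Rmax_sub_le|exact Hy]).
  apply ball_R, (Hd (Rmax y 0) (proj2 (ball_R _ _ _) H1) (Rmax_r _ _)).
Qed.

Definition excess (t : R) := RInt iext 0 t - t.

Lemma is_derive_excess t : is_derive excess t (iext t - 1).
Proof.
  eapply is_derive_eq; [|reflexivity].
  apply (is_derive_minus (fun t => RInt iext 0 t) (fun t => t));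
    [apply is_derive_RInt_upper, iext_cont|apply (is_derive_id t)].
Qed.

Lemma excess_cont t : continuous excess t.
Proof. apply (@ex_derive_continuous R_AbsRing R_NormedModule). eexists; apply is_derive_excess. Qed.

Lemma excess_periodic t : 0 <= t -> excess (t + rho) = excess t.
Proof.
  intros Ht.
  assert (HRInt : RInt iext 0 rho = rho).
  { transitivity (RInt i 0 rho).
    - apply RInt_ext. intros x Hx. rewrite Rmin_left, Rmax_right in Hx by lra. apply iext_eq; lra.
    - apply (Rmult_eq_reg_r (/ rho)); [|apply Rinv_neq_0_compat; lra]. rewrite Rinv_r by lra. exact Hi_mean. }
  pose (D := fun s => excess (s + rho) - excess s).
  assert (HD : D t = D 0).
  { apply eq_of_derive_zero; auto.
    - intros s Hs. eapply is_derive_eq.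
      { apply (is_derive_minus (fun s => excess (s + rho)) excess); [|apply is_derive_excess].
        apply (is_derive_comp excess (fun s => s + rho)); [apply is_derive_excess|].
        apply (is_derive_plus (fun s => s) (fun _ => rho)); [apply is_derive_id|apply is_derive_const]. }
      unfold plus, one, zero, scal, minus, opp; simpl. unfold mult, plus, opp; simpl.
      rewrite !iext_eq, Hi_per by lra. ring.
    - apply lim_minus; [|apply right_cont_of_continuous, excess_cont].
      apply (lim_comp (fun s => s + rho) excess); [|apply excess_cont].
      apply lim_plus; [apply right_cont_of_continuous, continuous_id|apply filterlim_const]. }
  unfold D, excess in HD. rewrite Rplus_0_l, HRInt, RInt_point in HD. unfold zero in HD; simpl in HD.
  unfold excess. lra.
Qed.

Definition excess_sup := (Rabs iM + 1) * rho.

Lemma excess_bound t : 0 <= t -> Rabs (excess t) <= excess_sup.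
Proof.
  assert (Hbase : forall t, 0 <= t <= rho -> Rabs (excess t) <= excess_sup).
  { intros s Hs. unfold excess, excess_sup.
    assert (H1 : Rabs (RInt iext 0 s) <= (s - 0) * Rabs iM).
    { apply abs_RInt_le_const; [lra|apply ex_RInt_cont_everywhere, iext_cont|].
      intros u Hu. pose proof (iext_bound u). rewrite !Rabs_right by lra. lra. }
    pose proof (Rabs_pos iM).
    eapply Rle_trans; [apply Rabs_triang|]. rewrite Rabs_Ropp, (Rabs_right s) by lra. nra. }
  assert (Hind : forall n : nat, forall t, 0 <= t <= INR n * rho -> Rabs (excess t) <= excess_sup).
  { induction n as [|n IH]; intros s Hs.
    - apply Hbase. simpl in Hs. lra.
    - rewrite S_INR in Hs. destruct (Rle_dec s rho); [apply Hbase; lra|].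
      replace s with ((s - rho) + rho) by ring. rewrite excess_periodic by lra. apply IH. lra. }
  intros Ht. destruct (INR_archimed rho t Hrho) as [n Hn]. apply (Hind n). lra.
Qed.

Lemma w_cont s : 0 < s -> continuous w s.
Proof. intros Hs. apply (@ex_derive_continuous R_AbsRing R_NormedModule). eexists; apply Hw_derive; auto. Qed.

Lemma w_right_cont t0 : 0 <= t0 -> right_cont w t0.
Proof.
  intros [H|<-]; [apply right_cont_of_continuous, w_cont; auto|].
  apply right_cont_of_eps. intros eps Heps.
  destruct (continuous_eps w rho (w_cont rho Hrho) eps Heps) as [d [Hd Hdd]].
  exists d; split; auto. intros y Hy.
  rewrite <- (Hw_per y), <- (Hw_per 0), Rplus_0_l by lra. apply Hdd. rewrite Rabs_right; lra.
Qed.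

Definition w_sup := Rabs (w rho) + 2 * Rabs iM.

(* From time [rho] on, [w] is trapped by comparison between [0] and [iM] up to a decaying term;
   periodicity covers [[0, rho]]. *)
Lemma w_bound t : 0 <= t -> Rabs (w t) <= w_sup.
Proof.
  assert (Hbig : forall t, rho <= t -> Rabs (w t) <= w_sup).
  { clear t. intros t Ht.
    assert (E0 : 0 < exp (- b4 * (t - rho)) <= 1) by (split; [apply exp_pos|apply exp_le_1; nra]).
    assert (A1 : w t - iM <= (w rho - iM) * exp (- b4 * (t - rho))).
    { apply (exp_decay_of_derive_le (fun s => w s - iM) (fun s => b4 * (i s - w s)) b4 rho t Ht).
      - intros s Hs. eapply is_derive_eq.
        { apply (is_derive_minus w (fun _ => iM)); [apply Hw_derive; lra|apply is_derive_const]. }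
        unfold minus, plus, opp, zero; simpl. ring.
      - intros s Hs. pose proof (Hi_bound s ltac:(lra)). nra.
      - apply lim_minus; [apply w_right_cont; lra|apply filterlim_const]. }
    assert (A2 : - w t <= - w rho * exp (- b4 * (t - rho))).
    { apply (exp_decay_of_derive_le (fun s => - w s) (fun s => - (b4 * (i s - w s))) b4 rho t Ht).
      - intros s Hs. apply (is_derive_opp w). apply Hw_derive; lra.
      - intros s Hs. pose proof (Hi_bound s ltac:(lra)). nra.
      - apply (lim_comp w Ropp _ (w_right_cont rho ltac:(lra))).
        exact (@filterlim_opp R_AbsRing R_NormedModule _). }
    unfold w_sup. pose proof (Rabs_pos iM). pose proof (Rabs_pos (w rho)).
    pose proof (Rle_abs iM). pose proof (Rle_abs (w rho)). pose proof (Rle_abs (- w rho)).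
    pose proof (Rle_abs (- iM)). rewrite Rabs_Ropp in *.
    apply Rabs_le. split; nra. }
  intros Ht. destruct (Rle_dec rho t); [apply Hbig; auto|]. rewrite <- Hw_per by auto. apply Hbig; lra.
Qed.

Definition F := sysF a1 a2 b2 b3 b4 d1 d2 d4 i.
Definition p := fun t : R => (1, 0, 0, w t).

Lemma p_sol : is_sol F 0 p_infty p.
Proof.
  intros c Hc. simpl in Hc.
  destruct Hc as [H|[H|[H|[H|[]]]]]; subst c; simpl; split;
    try (apply right_cont_of_continuous, continuous_const).
  - intros t _ _. eapply is_derive_eq; [apply is_derive_const|]. unfold zero; simpl. ring.
  - intros t _ _. eapply is_derive_eq; [apply is_derive_const|]. unfold zero; simpl. ring.
  - intros t _ _. eapply is_derive_eq; [apply is_derive_const|]. unfold zero; simpl. ring.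
  - intros t Ht _. eapply is_derive_eq; [apply Hw_derive; auto|ring].
  - apply (w_right_cont 0); lra.
Qed.

Lemma p_periodic t : 0 <= t -> p (t + rho) = p t.
Proof. intros Ht. unfold p. rewrite Hw_per; auto. Qed.

Lemma c1_F s y : c1 (F s y) = c1 y * (1 - c1 y - a1 * c2 y - d1 * c3 y).
Proof. destruct y as [[[? ?] ?] ?]; reflexivity. Qed.
Lemma c2_F s y : c2 (F s y) = b2 * c2 y * (1 - c2 y - a2 * c1 y - d2 * c4 y).
Proof. destruct y as [[[? ?] ?] ?]; reflexivity. Qed.
Lemma c3_F s y : c3 (F s y) = b3 * (c2 y - c3 y).
Proof. destruct y as [[[? ?] ?] ?]; reflexivity. Qed.
Lemma c4_F s y : c4 (F s y) = b4 * (i s - c4 y - d4 * c4 y * c2 y).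
Proof. destruct y as [[[? ?] ?] ?]; reflexivity. Qed.

Lemma ndist_p y s : ndist y (p s) =
  Rmax (Rmax (Rabs (c1 y - 1)) (Rabs (c2 y))) (Rmax (Rabs (c3 y)) (Rabs (c4 y - w s))).
Proof. destruct y as [[[? ?] ?] ?]. unfold ndist, p; simpl. rewrite !Rminus_0_r. reflexivity. Qed.

Lemma ndist_p_le y s r : ndist y (p s) <= r ->
  Rabs (c1 y - 1) <= r /\ Rabs (c2 y) <= r /\ Rabs (c3 y) <= r /\ Rabs (c4 y - w s) <= r.
Proof.
  rewrite ndist_p. intros H.
  pose proof (Rmax_l (Rmax (Rabs (c1 y - 1)) (Rabs (c2 y))) (Rmax (Rabs (c3 y)) (Rabs (c4 y - w s)))).
  pose proof (Rmax_r (Rmax (Rabs (c1 y - 1)) (Rabs (c2 y))) (Rmax (Rabs (c3 y)) (Rabs (c4 y - w s)))).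
  pose proof (Rmax_l (Rabs (c1 y - 1)) (Rabs (c2 y))). pose proof (Rmax_r (Rabs (c1 y - 1)) (Rabs (c2 y))).
  pose proof (Rmax_l (Rabs (c3 y)) (Rabs (c4 y - w s))). pose proof (Rmax_r (Rabs (c3 y)) (Rabs (c4 y - w s))).
  repeat split; lra.
Qed.

Lemma ndist_p_le_of_sqr y s e : 0 <= e ->
  (c1 y - 1) * (c1 y - 1) <= e * e -> c2 y * c2 y <= e * e -> c3 y * c3 y <= e * e ->
  (c4 y - w s) * (c4 y - w s) <= e * e -> ndist y (p s) <= e.
Proof. intros He H1 H2 H3 H4. rewrite ndist_p. repeat apply Rmax_lub; apply abs_le_of_sqr_le; auto. Qed.

Lemma ndist_p_lt_of_sqr y s e : 0 < e ->
  (c1 y - 1) * (c1 y - 1) < e * e -> c2 y * c2 y < e * e -> c3 y * c3 y < e * e ->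
  (c4 y - w s) * (c4 y - w s) < e * e -> ndist y (p s) < e.
Proof. intros He H1 H2 H3 H4. rewrite ndist_p. repeat apply Rmax_lub_lt; apply Rabs_def1; nra. Qed.

Lemma ndist_p_cont {Fl : (R -> Prop) -> Prop} {FFl : Filter Fl} (x : R -> state) s0 :
  (forall c, In c comps -> filterlim (fun s => c (x s)) Fl (locally (c (x s0)))) ->
  filterlim w Fl (locally (w s0)) ->
  filterlim (fun s => ndist (x s) (p s)) Fl (locally (ndist (x s0) (p s0))).
Proof.
  intros Hx Hw'. rewrite ndist_p.
  apply (filterlim_ext (fun s => Rmax (Rmax (Rabs (c1 (x s) - 1)) (Rabs (c2 (x s))))
                                      (Rmax (Rabs (c3 (x s))) (Rabs (c4 (x s) - w s))))).
  { intros; rewrite ndist_p; reflexivity. }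
  apply lim_Rmax; apply lim_Rmax; apply lim_Rabs;
    try apply lim_minus; try apply filterlim_const; auto; apply Hx; simpl; auto.
Qed.

Definition solves_on (x : R -> state) t0 T :=
  (forall s, t0 < s <= T -> forall c, In c comps -> is_derive (fun s => c (x s)) s (c (F s (x s)))) /\
  (forall c, In c comps -> right_cont (fun s => c (x s)) t0).

Lemma solves_on_of_is_sol x t0 T : is_sol F t0 p_infty x -> solves_on x t0 T.
Proof.
  intros H. split; [|intros c Hc; apply (H c Hc)].
  intros s Hs c Hc. apply (H c Hc); [lra|exact I].
Qed.

Definition gap := a2 + d2 - 1.
Definition u4_sup := w_sup + 1.

Lemma u4_sup_ge_1 : 1 <= u4_sup.
Proof. unfold u4_sup, w_sup. pose proof (Rabs_pos (w rho)). pose proof (Rabs_pos iM). lra. Qed.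

Lemma abs_u4_le y s r : 0 <= s -> r <= 1/2 -> ndist y (p s) <= r -> Rabs (c4 y) <= u4_sup.
Proof.
  intros Hs Hr H. destruct (ndist_p_le y s r H) as [_ [_ [_ H4]]]. pose proof (w_bound s Hs).
  unfold u4_sup. replace (c4 y) with ((c4 y - w s) + w s) by ring.
  eapply Rle_trans; [apply Rabs_triang|]. lra.
Qed.

(* On the [radius]-neighbourhood of [p], the growth rate of the weighted [u2] stays within
   [|gap|/2] of [- b2 gap]. *)
Definition radius := Rmin (1/2) (Rabs gap / (2 * (1 + a2 + d2 * d4 * u4_sup))).

Lemma radius_pos : gap <> 0 -> 0 < radius.
Proof.
  intros H. unfold radius. apply Rmin_case; [lra|]. pose proof u4_sup_ge_1.
  apply Rdiv_lt_0_compat; [apply Rabs_pos_lt; auto|].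
  assert (0 < d2 * d4) by (apply Rmult_lt_0_compat; auto). nra.
Qed.

Lemma radius_le : radius <= 1/2.
Proof. apply Rmin_l. Qed.

Lemma rate_error_le y s r : 0 <= s -> r <= radius -> ndist y (p s) <= r ->
  Rabs (- c2 y - a2 * (c1 y - 1) + d2 * d4 * c4 y * c2 y) <= Rabs gap / 2.
Proof.
  intros Hs Hr H. pose proof radius_le as Hr1. pose proof u4_sup_ge_1 as Hu4.
  destruct (ndist_p_le y s r H) as [H1 [H2 [_ _]]].
  pose proof (abs_u4_le y s r Hs ltac:(lra) H) as H4.
  assert (Hdd : 0 < d2 * d4) by (apply Rmult_lt_0_compat; auto).
  set (k := 2 * (1 + a2 + d2 * d4 * u4_sup)).
  assert (Hk : 0 < k) by (unfold k; nra).
  assert (Hr0 : radius * k <= Rabs gap).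
  { apply (Rmult_le_reg_r (/ k)); [apply Rinv_0_lt_compat; auto|].
    rewrite Rmult_assoc, Rinv_r, Rmult_1_r by lra. apply Rmin_r. }
  eapply Rle_trans; [apply Rabs_triang|].
  assert (E1 : Rabs (- c2 y - a2 * (c1 y - 1)) <= r + a2 * r).
  { unfold Rminus at 1. eapply Rle_trans; [apply Rabs_triang|].
    rewrite !Rabs_Ropp, Rabs_mult, (Rabs_right a2) by lra. nra. }
  assert (E2 : Rabs (d2 * d4 * c4 y * c2 y) <= d2 * d4 * u4_sup * r).
  { rewrite !Rabs_mult, (Rabs_right d2), (Rabs_right d4) by lra.
    pose proof (Rabs_pos (c4 y)). pose proof (Rabs_pos (c2 y)).
    apply Rmult_le_compat; try nra. }
  assert (0 <= r) by (eapply Rle_trans; [apply Rabs_pos|exact H2]).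
  assert (r * k <= radius * k) by (apply Rmult_le_compat_r; lra).
  unfold k in *. lra.
Qed.

(* The weight cancels the [u4]- and input-terms in [(ln u2)'] (see the header). *)
Definition weight (x : R -> state) s := - (b2 * d2 / b4) * c4 (x s) + b2 * d2 * excess s.
Definition weighted_u2 (x : R -> state) s := c2 (x s) * c2 (x s) * exp (2 * weight x s).
Definition weight_osc := (b2 * d2 / b4) * (2 * u4_sup) + b2 * d2 * (2 * excess_sup).

Lemma weighted_u2_nonneg x s : 0 <= weighted_u2 x s.
Proof. unfold weighted_u2. pose proof (exp_pos (2 * weight x s)). pose proof (Rle_0_sqr (c2 (x s))). unfold Rsqr in *. nra. Qed.

Lemma is_derive_weighted_u2 x t0 T s : 0 <= t0 -> solves_on x t0 T -> t0 < s <= T ->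
  is_derive (weighted_u2 x) s (2 * b2 * weighted_u2 x s *
     (- gap - c2 (x s) - a2 * (c1 (x s) - 1) + d2 * d4 * c4 (x s) * c2 (x s))).
Proof.
  intros Ht0 [Hd _] Hs.
  pose proof (Hd s Hs c2 ltac:(simpl; auto)) as D2. pose proof (Hd s Hs c4 ltac:(simpl; auto)) as D4.
  rewrite c2_F in D2. rewrite c4_F in D4.
  unfold weighted_u2. eapply is_derive_eq.
  { apply (is_derive_Rmult (fun s => c2 (x s) * c2 (x s)) (fun s => exp (2 * weight x s))).
    - apply is_derive_sqr, D2.
    - apply is_derive_exp_comp, is_derive_scal. unfold weight.
      apply (is_derive_plus (fun s => - (b2 * d2 / b4) * c4 (x s)) (fun s => b2 * d2 * excess s)).
      + apply is_derive_scal, D4.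
      + apply is_derive_scal, is_derive_excess. }
  rewrite iext_eq by lra. unfold gap, plus; simpl. field. lra.
Qed.

Lemma weighted_u2_right_cont x t0 T : solves_on x t0 T -> right_cont (weighted_u2 x) t0.
Proof.
  intros [_ Hr]. apply lim_mult; [apply lim_mult; apply Hr; simpl; auto|].
  apply (lim_comp (fun s => 2 * weight x s) exp); [|apply continuous_exp].
  apply lim_mult; [apply filterlim_const|]. apply lim_plus; apply lim_mult; try apply filterlim_const.
  - apply Hr; simpl; auto.
  - apply right_cont_of_continuous, excess_cont.
Qed.

Lemma weight_diff_le x s t : 0 <= s -> 0 <= t -> ndist (x s) (p s) <= 1/2 -> ndist (x t) (p t) <= 1/2 ->
  Rabs (weight x s - weight x t) <= weight_osc.
Proof.
  intros Hs Ht Hxs Hxt.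
  pose proof (abs_u4_le (x s) s (1/2) Hs ltac:(lra) Hxs). pose proof (abs_u4_le (x t) t (1/2) Ht ltac:(lra) Hxt).
  pose proof (excess_bound s Hs). pose proof (excess_bound t Ht).
  unfold weight, weight_osc.
  replace (- (b2 * d2 / b4) * c4 (x s) + b2 * d2 * excess s - (- (b2 * d2 / b4) * c4 (x t) + b2 * d2 * excess t))
    with ((b2 * d2 / b4) * (c4 (x t) + - c4 (x s)) + b2 * d2 * (excess s + - excess t)) by ring.
  assert (0 < b2 * d2 / b4) by (apply Rdiv_lt_0_compat; [apply Rmult_lt_0_compat|]; auto).
  assert (0 < b2 * d2) by (apply Rmult_lt_0_compat; auto).
  eapply Rle_trans; [apply Rabs_triang|].
  rewrite (Rabs_mult (b2 * d2 / b4)), (Rabs_mult (b2 * d2)), (Rabs_right (b2 * d2 / b4)),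
    (Rabs_right (b2 * d2)) by lra.
  apply Rplus_le_compat; apply Rmult_le_compat_l; try lra;
    (eapply Rle_trans; [apply Rabs_triang|]); rewrite Rabs_Ropp; lra.
Qed.

Lemma sqr_u2_eq x s : c2 (x s) * c2 (x s) = weighted_u2 x s * exp (- (2 * weight x s)).
Proof.
  unfold weighted_u2. rewrite Rmult_assoc, <- exp_plus.
  replace (2 * weight x s + - (2 * weight x s)) with 0 by ring. rewrite exp_0; ring.
Qed.

Definition rate := Rmin (Rmin (b2 * gap / 2) (b3 / 2)) (Rmin (1/4) (b4 / 2)).
Definition K2 := exp (2 * weight_osc).
Definition K3 := 1 + b3 * K2 / (b3 - rate).
Definition K1 := 1 + (9 * (a1 * a1) * K2 + 9 * (d1 * d1) * K3) / (1/2 - rate).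
Definition K4 := 1 + b4 * (d4 * d4) * (u4_sup * u4_sup) * K2 / (b4 - rate).
Definition decay_const := Rmax (Rmax K1 K2) (Rmax K3 K4).

Lemma rate_facts : 0 < gap -> 0 < rate /\ rate < b2 * gap /\ rate < b3 /\ rate < 1/2 /\ rate < b4.
Proof.
  intros Hg. assert (0 < b2 * gap) by (apply Rmult_lt_0_compat; auto).
  unfold rate.
  pose proof (Rmin_l (Rmin (b2 * gap / 2) (b3 / 2)) (Rmin (1/4) (b4 / 2))).
  pose proof (Rmin_r (Rmin (b2 * gap / 2) (b3 / 2)) (Rmin (1/4) (b4 / 2))).
  pose proof (Rmin_l (b2 * gap / 2) (b3 / 2)). pose proof (Rmin_r (b2 * gap / 2) (b3 / 2)).
  pose proof (Rmin_l (1/4) (b4 / 2)). pose proof (Rmin_r (1/4) (b4 / 2)).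
  repeat split; try lra. repeat apply Rmin_glb_lt; lra.
Qed.

Lemma K2_ge_1 : 1 <= K2.
Proof.
  unfold K2. rewrite <- exp_0. apply exp_le_compat. unfold weight_osc. pose proof u4_sup_ge_1.
  assert (0 <= excess_sup) by (unfold excess_sup; pose proof (Rabs_pos iM); nra).
  assert (0 < b2 * d2 / b4) by (apply Rdiv_lt_0_compat; [apply Rmult_lt_0_compat|]; auto).
  assert (0 < b2 * d2) by (apply Rmult_lt_0_compat; auto). nra.
Qed.

Lemma decay_const_ge : 0 < gap -> 1 <= decay_const /\
  K1 <= decay_const /\ K2 <= decay_const /\ K3 <= decay_const /\ K4 <= decay_const.
Proof.
  intros Hg. destruct (rate_facts Hg) as [B0 [B1 [B2 [B3 B4]]]]. pose proof K2_ge_1.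
  unfold decay_const.
  pose proof (Rmax_l (Rmax K1 K2) (Rmax K3 K4)). pose proof (Rmax_r (Rmax K1 K2) (Rmax K3 K4)).
  pose proof (Rmax_l K1 K2). pose proof (Rmax_r K1 K2). pose proof (Rmax_l K3 K4). pose proof (Rmax_r K3 K4).
  repeat split; lra.
Qed.

Section Decay.
Variables (x : R -> state) (t0 T : R).
Hypothesis Hgap : 0 < gap.
Hypothesis Ht0 : 0 <= t0.
Hypothesis Hsol : solves_on x t0 T.
Hypothesis Hnear : forall s, t0 <= s <= T -> ndist (x s) (p s) <= radius.

Let d0 := ndist (x t0) (p t0).

Lemma d0_bounds : (c1 (x t0) - 1) * (c1 (x t0) - 1) <= d0 * d0 /\ c2 (x t0) * c2 (x t0) <= d0 * d0 /\
  c3 (x t0) * c3 (x t0) <= d0 * d0 /\ (c4 (x t0) - w t0) * (c4 (x t0) - w t0) <= d0 * d0.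
Proof.
  destruct (ndist_p_le (x t0) t0 d0 (Rle_refl _)) as [I1 [I2 [I3 I4]]].
  repeat split; apply sqr_le_of_abs_le; auto.
Qed.

Lemma is_derive_u1 s : t0 < s <= T ->
  is_derive (fun s => c1 (x s)) s (c1 (x s) * (1 - c1 (x s) - a1 * c2 (x s) - d1 * c3 (x s))).
Proof. intros Hs. rewrite <- (c1_F s). apply (proj1 Hsol); simpl; auto. Qed.

Lemma is_derive_u3 s : t0 < s <= T -> is_derive (fun s => c3 (x s)) s (b3 * (c2 (x s) - c3 (x s))).
Proof. intros Hs. rewrite <- (c3_F s). apply (proj1 Hsol); simpl; auto. Qed.

Lemma is_derive_u4 s : t0 < s <= T ->
  is_derive (fun s => c4 (x s)) s (b4 * (i s - c4 (x s) - d4 * c4 (x s) * c2 (x s))).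
Proof. intros Hs. rewrite <- (c4_F s). apply (proj1 Hsol); simpl; auto. Qed.

Lemma right_cont_comp_sol c : In c comps -> right_cont (fun s => c (x s)) t0.
Proof. apply (proj2 Hsol). Qed.

Lemma decay_u2 t : t0 <= t <= T -> c2 (x t) * c2 (x t) <= K2 * (d0 * d0) * exp (- rate * (t - t0)).
Proof.
  intros Ht. destruct (rate_facts Hgap) as [B0 [B1 _]].
  assert (HZ : weighted_u2 x t <= weighted_u2 x t0 * exp (- (b2 * gap) * (t - t0))).
  { apply (exp_decay_of_derive_le (weighted_u2 x) (fun s => 2 * b2 * weighted_u2 x s *
        (- gap - c2 (x s) - a2 * (c1 (x s) - 1) + d2 * d4 * c4 (x s) * c2 (x s))) (b2 * gap) t0 t).
    - lra.
    - intros s Hs. apply (is_derive_weighted_u2 x t0 T s); auto. lra.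
    - intros s Hs.
      pose proof (rate_error_le (x s) s radius ltac:(lra) (Rle_refl _) (Hnear s ltac:(lra))) as He.
      rewrite (Rabs_right gap) in He by lra. apply Rabs_le_between in He.
      pose proof (weighted_u2_nonneg x s).
      apply Rle_trans with (2 * b2 * weighted_u2 x s * (- gap / 2)); [apply Rmult_le_compat_l; nra|nra].
    - apply (weighted_u2_right_cont x t0 T Hsol). }
  pose proof (weight_diff_le x t0 t Ht0 ltac:(lra) ltac:(pose proof (Hnear t0 ltac:(lra)); pose proof radius_le; lra)
    ltac:(pose proof (Hnear t ltac:(lra)); pose proof radius_le; lra)) as Hw.
  apply Rabs_le_between in Hw.
  assert (HK : exp (2 * weight x t0 + - (2 * weight x t)) <= K2) by (apply exp_le_compat; lra).
  assert (HG : exp (- (b2 * gap) * (t - t0)) <= exp (- rate * (t - t0))) by (apply exp_le_compat; nra).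
  rewrite sqr_u2_eq. unfold weighted_u2 in HZ |- *.
  pose proof (exp_pos (- (2 * weight x t))). pose proof (exp_pos (2 * weight x t0 + - (2 * weight x t))).
  pose proof (exp_pos (- (b2 * gap) * (t - t0))).
  eapply Rle_trans; [apply Rmult_le_compat_r; [lra|exact HZ]|].
  replace (c2 (x t0) * c2 (x t0) * exp (2 * weight x t0) * exp (- (b2 * gap) * (t - t0)) * exp (- (2 * weight x t)))
    with (c2 (x t0) * c2 (x t0) * exp (2 * weight x t0 + - (2 * weight x t)) * exp (- (b2 * gap) * (t - t0)))
    by (rewrite exp_plus; ring).
  destruct d0_bounds as [_ [I2 _]]. pose proof (Rle_0_sqr (c2 (x t0))). unfold Rsqr in *.
  apply Rmult_le_compat; try nra.
Qed.

Lemma decay_u3 t : t0 <= t <= T -> c3 (x t) * c3 (x t) <= K3 * (d0 * d0) * exp (- rate * (t - t0)).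
Proof.
  intros Ht. destruct (rate_facts Hgap) as [B0 [_ [B2 _]]]. pose proof K2_ge_1.
  pose proof (Rle_0_sqr d0). pose proof (Rle_0_sqr (c3 (x t0))). unfold Rsqr in *.
  assert (HV : c3 (x t) * c3 (x t) <= (c3 (x t0) * c3 (x t0) + b3 * K2 * (d0 * d0) / (b3 - rate))
                                       * exp (- rate * (t - t0))).
  { apply (exp_decay_of_derive_le_forced (fun s => c3 (x s) * c3 (x s))
             (fun s => 2 * c3 (x s) * (b3 * (c2 (x s) - c3 (x s)))) b3 (b3 * K2 * (d0 * d0)) rate t0 t);
      try lra.
    - apply Rmult_le_pos; [apply Rmult_le_pos|]; lra.
    - intros s Hs. apply (is_derive_sqr (fun s => c3 (x s))).
      apply is_derive_u3; lra.
    - intros s Hs. pose proof (linear_energy_le (c3 (x s)) b3 (c2 (x s)) Hb3). pose proof (decay_u2 s ltac:(lra)).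
      nra.
    - apply lim_mult; apply right_cont_comp_sol; simpl; auto. }
  destruct d0_bounds as [_ [_ [I3 _]]]. pose proof (exp_pos (- rate * (t - t0))).
  replace (b3 * K2 * (d0 * d0) / (b3 - rate)) with ((b3 * K2 / (b3 - rate)) * (d0 * d0)) in HV by (field; lra).
  unfold K3. nra.
Qed.

Lemma decay_u1 t : t0 <= t <= T -> (c1 (x t) - 1) * (c1 (x t) - 1) <= K1 * (d0 * d0) * exp (- rate * (t - t0)).
Proof.
  intros Ht. destruct (rate_facts Hgap) as [B0 [_ [B2 [B3 _]]]].
  set (cc := 9 * (a1 * a1) * K2 + 9 * (d1 * d1) * K3).
  pose proof K2_ge_1. pose proof (Rle_0_sqr d0). pose proof (Rle_0_sqr a1). pose proof (Rle_0_sqr d1).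
  pose proof (Rle_0_sqr (c1 (x t0) - 1)). unfold Rsqr in *.
  assert (HK3 : 0 <= K3) by (unfold K3; assert (0 <= b3 * K2 / (b3 - rate)) by (apply Rdiv_le_0_compat; nra); lra).
  assert (Hcc : 0 <= cc) by (unfold cc; nra).
  assert (HV : (c1 (x t) - 1) * (c1 (x t) - 1) <=
               ((c1 (x t0) - 1) * (c1 (x t0) - 1) + cc * (d0 * d0) / (1/2 - rate)) * exp (- rate * (t - t0))).
  { apply (exp_decay_of_derive_le_forced (fun s => (c1 (x s) - 1) * (c1 (x s) - 1))
      (fun s => 2 * (c1 (x s) - 1) * (c1 (x s) * (1 - c1 (x s) - a1 * c2 (x s) - d1 * c3 (x s))))
      (1/2) (cc * (d0 * d0)) rate t0 t); try lra.
    - apply Rmult_le_pos; lra.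
    - intros s Hs. apply (is_derive_sqr (fun s => c1 (x s) - 1)). eapply is_derive_eq.
      { apply (is_derive_minus (fun s => c1 (x s)) (fun _ => 1)); [|apply is_derive_const].
        apply is_derive_u1; lra. }
      unfold minus, plus, opp, zero; simpl. ring.
    - intros s Hs. destruct (ndist_p_le (x s) s radius (Hnear s ltac:(lra))) as [J1 _].
      pose proof radius_le.
      pose proof (logistic_energy_le (c1 (x s) - 1) (c2 (x s)) (c3 (x s)) a1 d1 ltac:(lra)) as Hen.
      replace (2 * (c1 (x s) - 1) * (c1 (x s) * (1 - c1 (x s) - a1 * c2 (x s) - d1 * c3 (x s)))) with
        (2 * (c1 (x s) - 1) * (1 + (c1 (x s) - 1)) * (- (c1 (x s) - 1) - a1 * c2 (x s) - d1 * c3 (x s))) by ring.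
      eapply Rle_trans; [exact Hen|].
      pose proof (decay_u2 s ltac:(lra)). pose proof (decay_u3 s ltac:(lra)).
      pose proof (exp_pos (- rate * (s - t0))).
      assert (9 * (a1 * a1) * (c2 (x s) * c2 (x s)) <= 9 * (a1 * a1) * (K2 * (d0 * d0) * exp (- rate * (s - t0))))
        by (apply Rmult_le_compat_l; nra).
      assert (9 * (d1 * d1) * (c3 (x s) * c3 (x s)) <= 9 * (d1 * d1) * (K3 * (d0 * d0) * exp (- rate * (s - t0))))
        by (apply Rmult_le_compat_l; nra).
      unfold cc. nra.
    - apply lim_mult; apply lim_minus; try apply filterlim_const; apply right_cont_comp_sol; simpl; auto. }
  destruct d0_bounds as [I1 _]. pose proof (exp_pos (- rate * (t - t0))).
  replace (cc * (d0 * d0) / (1/2 - rate)) with ((cc / (1/2 - rate)) * (d0 * d0)) in HV by (field; lra).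
  unfold K1. fold cc. nra.
Qed.

Lemma decay_u4 t : t0 <= t <= T -> (c4 (x t) - w t) * (c4 (x t) - w t) <= K4 * (d0 * d0) * exp (- rate * (t - t0)).
Proof.
  intros Ht. destruct (rate_facts Hgap) as [B0 [_ [_ [_ B4]]]].
  set (cc := b4 * (d4 * d4) * (u4_sup * u4_sup) * K2).
  pose proof K2_ge_1. pose proof u4_sup_ge_1. pose proof (Rle_0_sqr d0). pose proof (Rle_0_sqr d4).
  pose proof (Rle_0_sqr (c4 (x t0) - w t0)). unfold Rsqr in *.
  assert (Hcc : 0 <= cc) by (unfold cc; apply Rmult_le_pos; [apply Rmult_le_pos|]; nra).
  assert (HV : (c4 (x t) - w t) * (c4 (x t) - w t) <=
               ((c4 (x t0) - w t0) * (c4 (x t0) - w t0) + cc * (d0 * d0) / (b4 - rate)) * exp (- rate * (t - t0))).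
  { apply (exp_decay_of_derive_le_forced (fun s => (c4 (x s) - w s) * (c4 (x s) - w s))
      (fun s => 2 * (c4 (x s) - w s) * (b4 * (- d4 * c4 (x s) * c2 (x s) - (c4 (x s) - w s))))
      b4 (cc * (d0 * d0)) rate t0 t); try lra.
    - apply Rmult_le_pos; lra.
    - intros s Hs. apply (is_derive_sqr (fun s => c4 (x s) - w s)). eapply is_derive_eq.
      { apply (is_derive_minus (fun s => c4 (x s)) w); [|apply Hw_derive; lra].
        apply is_derive_u4; lra. }
      unfold minus, plus, opp; simpl. ring.
    - intros s Hs.
      pose proof (linear_energy_le (c4 (x s) - w s) b4 (- d4 * c4 (x s) * c2 (x s)) Hb4) as Hen.
      eapply Rle_trans; [exact Hen|].
      pose proof (decay_u2 s ltac:(lra)). pose proof radius_le.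
      pose proof (abs_u4_le (x s) s radius ltac:(lra) ltac:(lra) (Hnear s ltac:(lra))) as U4.
      apply sqr_le_of_abs_le in U4. pose proof (Rle_0_sqr (c2 (x s))). unfold Rsqr in *.
      assert (0 <= b4 * (d4 * d4)) by nra.
      assert (b4 * (d4 * d4) * (c4 (x s) * c4 (x s)) * (c2 (x s) * c2 (x s)) <=
              b4 * (d4 * d4) * (u4_sup * u4_sup) * (K2 * (d0 * d0) * exp (- rate * (s - t0))))
        by (apply Rmult_le_compat; try nra).
      unfold cc. nra.
    - apply lim_mult; apply lim_minus; try (apply w_right_cont; lra); apply right_cont_comp_sol; simpl; auto. }
  destruct d0_bounds as [_ [_ [_ I4]]]. pose proof (exp_pos (- rate * (t - t0))).
  replace (cc * (d0 * d0) / (b4 - rate)) with ((cc / (b4 - rate)) * (d0 * d0)) in HV by (field; lra).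
  unfold K4. fold cc. nra.
Qed.

Lemma decay_all t : t0 <= t <= T ->
  let e := decay_const * (d0 * d0) * exp (- rate * (t - t0)) in
  (c1 (x t) - 1) * (c1 (x t) - 1) <= e /\ c2 (x t) * c2 (x t) <= e /\
  c3 (x t) * c3 (x t) <= e /\ (c4 (x t) - w t) * (c4 (x t) - w t) <= e.
Proof.
  intros Ht e. destruct (decay_const_ge Hgap) as [_ [S1 [S2 [S3 S4]]]].
  pose proof (exp_pos (- rate * (t - t0))). pose proof (Rle_0_sqr d0). unfold Rsqr in *.
  assert (Hm : forall K, K <= decay_const -> K * (d0 * d0) * exp (- rate * (t - t0)) <= e).
  { intros K HK. unfold e. apply Rmult_le_compat_r; [lra|]. apply Rmult_le_compat_r; lra. }
  repeat split.
  - eapply Rle_trans; [apply decay_u1; auto|apply Hm, S1].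
  - eapply Rle_trans; [apply decay_u2; auto|apply Hm, S2].
  - eapply Rle_trans; [apply decay_u3; auto|apply Hm, S3].
  - eapply Rle_trans; [apply decay_u4; auto|apply Hm, S4].
Qed.
End Decay.

(* A globally Lipschitz and bounded field that agrees with [F] within distance [1/2] of [p];
   Picard iteration for it provides the solutions. *)
Definition clip_bound := u4_sup + 1.
Definition clip (y : R) := Rmax (- clip_bound) (Rmin clip_bound y).

Lemma clip_bound_ge_2 : 2 <= clip_bound.
Proof. unfold clip_bound. pose proof u4_sup_ge_1. lra. Qed.

Lemma abs_clip_le y : Rabs (clip y) <= clip_bound.
Proof. pose proof clip_bound_ge_2. unfold clip, Rmax, Rmin. repeat destruct Rle_dec; apply Rabs_le; lra. Qed.

Lemma clip_lipschitz y z : Rabs (clip y - clip z) <= Rabs (y - z).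
Proof.
  pose proof clip_bound_ge_2. unfold clip, Rmax, Rmin. repeat destruct Rle_dec;
  unfold Rabs; repeat match goal with |- context [Rcase_abs ?x] => destruct (Rcase_abs x) end; lra.
Qed.

Lemma clip_id y : Rabs y <= clip_bound -> clip y = y.
Proof. intros H. apply Rabs_le_between in H. unfold clip, Rmax, Rmin. repeat destruct Rle_dec; lra. Qed.

Definition Fclip (s : R) (y : state) : state :=
  let v1 := clip (c1 y) in let v2 := clip (c2 y) in let v3 := clip (c3 y) in let v4 := clip (c4 y) in
  (v1 * (1 - v1 - a1 * v2 - d1 * v3), b2 * v2 * (1 - v2 - a2 * v1 - d2 * v4), b3 * (v2 - v3),
   b4 * (iext s - v4 - d4 * v4 * v2)).

Lemma Fclip_eq_F s y : 0 <= s -> ndist y (p s) <= 1/2 -> Fclip s y = F s y.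
Proof.
  intros Hs H. destruct (ndist_p_le y s (1/2) H) as [H1 [H2 [H3 _]]].
  pose proof (abs_u4_le y s (1/2) Hs ltac:(lra) H). pose proof clip_bound_ge_2.
  assert (E1 : clip (c1 y) = c1 y) by (apply clip_id; apply Rabs_le_between in H1; apply Rabs_le; lra).
  assert (E2 : clip (c2 y) = c2 y) by (apply clip_id; lra).
  assert (E3 : clip (c3 y) = c3 y) by (apply clip_id; lra).
  assert (E4 : clip (c4 y) = c4 y) by (apply clip_id; unfold clip_bound; lra).
  unfold Fclip. rewrite E1, E2, E3, E4, iext_eq by auto.
  destruct y as [[[y1 y2] y3] y4]. reflexivity.
Qed.

Definition Fclip_lip :=
  (clip_bound * (1 + a1 + d1) + (1 + clip_bound + a1 * clip_bound + d1 * clip_bound))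
  + b2 * (clip_bound * (1 + a2 + d2) + (1 + clip_bound + a2 * clip_bound + d2 * clip_bound))
  + 2 * b3 + b4 * (1 + 2 * d4 * clip_bound) + 1.

Definition Fclip_sup :=
  clip_bound * (1 + clip_bound + a1 * clip_bound + d1 * clip_bound)
  + b2 * clip_bound * (1 + clip_bound + a2 * clip_bound + d2 * clip_bound)
  + 2 * b3 * clip_bound + b4 * (Rabs iM + clip_bound + d4 * clip_bound * clip_bound).

Lemma Fclip_consts_pos : 0 < Fclip_lip /\ 0 <= Fclip_sup.
Proof.
  pose proof clip_bound_ge_2. pose proof (Rabs_pos iM). unfold Fclip_lip, Fclip_sup.
  set (B := clip_bound) in *.
  assert (0 <= a1 * B) by nra. assert (0 <= d1 * B) by nra.
  assert (0 <= a2 * B) by nra. assert (0 <= d2 * B) by nra.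
  assert (0 <= d4 * B) by nra. assert (0 <= d4 * B * B) by nra.
  assert (0 <= B * (1 + a1 + d1)) by nra. assert (0 <= B * (1 + a2 + d2)) by nra.
  assert (0 <= b2 * (B * (1 + a2 + d2) + (1 + B + a2 * B + d2 * B))) by (apply Rmult_le_pos; lra).
  assert (0 <= b4 * (1 + 2 * d4 * B)) by (apply Rmult_le_pos; lra).
  assert (0 <= B * (1 + B + a1 * B + d1 * B)) by (apply Rmult_le_pos; lra).
  assert (0 <= b2 * B * (1 + B + a2 * B + d2 * B)) by (apply Rmult_le_pos; [apply Rmult_le_pos|]; lra).
  assert (0 <= b4 * (Rabs iM + B + d4 * B * B)) by (apply Rmult_le_pos; lra).
  assert (0 <= 2 * b3 * B) by nra.
  split; lra.
Qed.

Lemma Fclip_lipschitz c s y z : In c comps -> Rabs (c (Fclip s y) - c (Fclip s z)) <= Fclip_lip * ndist y z.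
Proof.
  intros Hc. set (D := ndist y z). pose proof (ndist_nonneg y z) as HD. fold D in HD.
  assert (E : forall c, In c comps -> Rabs (clip (c y) - clip (c z)) <= D)
    by (intros c' Hc'; eapply Rle_trans; [apply clip_lipschitz|apply abs_comp_le_ndist; auto]).
  pose proof (E c1 ltac:(simpl; auto)) as E1. pose proof (E c2 ltac:(simpl; auto)) as E2.
  pose proof (E c3 ltac:(simpl; auto)) as E3. pose proof (E c4 ltac:(simpl; auto)) as E4.
  pose proof (abs_clip_le (c1 y)) as B1. pose proof (abs_clip_le (c2 y)) as B2.
  pose proof (abs_clip_le (c4 y)) as B4. pose proof (abs_clip_le (c1 z)) as B1'.
  pose proof (abs_clip_le (c2 z)) as B2'. pose proof (abs_clip_le (c3 z)) as B3'.
  pose proof (abs_clip_le (c4 z)) as B4'.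
  pose proof clip_bound_ge_2 as HB. set (B := clip_bound) in *.
  set (u1 := clip (c1 y)) in *. set (u2 := clip (c2 y)) in *. set (u3 := clip (c3 y)) in *.
  set (u4 := clip (c4 y)) in *. set (v1 := clip (c1 z)) in *. set (v2 := clip (c2 z)) in *.
  set (v3 := clip (c3 z)) in *. set (v4 := clip (c4 z)) in *.
  set (L1 := B * (1 + a1 + d1) + (1 + B + a1 * B + d1 * B)).
  set (L2 := B * (1 + a2 + d2) + (1 + B + a2 * B + d2 * B)).
  assert (0 <= L1) by (unfold L1; nra). assert (0 <= L2) by (unfold L2; nra).
  assert (0 <= b4 * (1 + 2 * d4 * B)) by (apply Rmult_le_pos; nra).
  assert (HK : forall K, K <= L1 + b2 * L2 + 2 * b3 + b4 * (1 + 2 * d4 * B) -> K * D <= Fclip_lip * D)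
    by (intros K HK; apply Rmult_le_compat_r; auto; unfold Fclip_lip; fold B; fold L1 L2; lra).
  simpl in Hc. destruct Hc as [Hc|[Hc|[Hc|[Hc|[]]]]]; subst c; unfold Fclip; simpl; fold u1 u2 u3 u4 v1 v2 v3 v4.
  - eapply Rle_trans; [apply (abs_competition_prod_sub_le _ _ _ _ _ _ a1 d1 B D); auto; lra|].
    apply HK. assert (0 <= b2 * L2) by nra. unfold L1 in *. lra.
  - replace (b2 * u2 * (1 - u2 - a2 * u1 - d2 * u4) - b2 * v2 * (1 - v2 - a2 * v1 - d2 * v4)) with
      (b2 * (u2 * (1 - u2 - a2 * u1 - d2 * u4) - v2 * (1 - v2 - a2 * v1 - d2 * v4))) by ring.
    rewrite Rabs_mult, (Rabs_right b2) by lra.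
    eapply Rle_trans; [apply Rmult_le_compat_l;
      [lra|apply (abs_competition_prod_sub_le _ _ _ _ _ _ a2 d2 B D); auto; lra]|].
    rewrite <- Rmult_assoc. apply HK. fold L2. lra.
  - replace (b3 * (u2 - u3) - b3 * (v2 - v3)) with (b3 * ((u2 - v2) + - (u3 - v3))) by ring.
    rewrite Rabs_mult, (Rabs_right b3) by lra.
    pose proof (Rabs_triang (u2 - v2) (- (u3 - v3))). rewrite Rabs_Ropp in *.
    apply Rle_trans with ((2 * b3) * D); [|apply HK; assert (0 <= b2 * L2) by nra; lra].
    apply Rle_trans with (b3 * (2 * D)); [apply Rmult_le_compat_l; lra|right; ring].
  - eapply Rle_trans; [apply (abs_uptake_sub_le _ _ _ _ _ b4 d4 B D); auto|].
    apply HK. assert (0 <= b2 * L2) by nra. lra.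
Qed.

Lemma Fclip_bounded c s y : In c comps -> Rabs (c (Fclip s y)) <= Fclip_sup.
Proof.
  intros Hc.
  pose proof (abs_clip_le (c1 y)) as B1. pose proof (abs_clip_le (c2 y)) as B2.
  pose proof (abs_clip_le (c3 y)) as B3. pose proof (abs_clip_le (c4 y)) as B4.
  pose proof clip_bound_ge_2 as HB. set (B := clip_bound) in *.
  pose proof (iext_bound s). pose proof (Rabs_pos iM). pose proof (Rle_abs iM).
  set (u1 := clip (c1 y)) in *. set (u2 := clip (c2 y)) in *. set (u3 := clip (c3 y)) in *.
  set (u4 := clip (c4 y)) in *.
  assert (0 <= a1 * B) by nra. assert (0 <= d1 * B) by nra. assert (0 <= a2 * B) by nra.
  assert (0 <= d2 * B) by nra. assert (0 <= d4 * B * B) by nra.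
  assert (M1 : 0 <= B * (1 + B + a1 * B + d1 * B)) by nra.
  assert (M2 : 0 <= b2 * B * (1 + B + a2 * B + d2 * B)) by (apply Rmult_le_pos; nra).
  assert (M3 : 0 <= 2 * b3 * B) by nra.
  assert (M4 : 0 <= b4 * (Rabs iM + B + d4 * B * B)) by (apply Rmult_le_pos; lra).
  unfold Fclip_sup; fold B.
  simpl in Hc. destruct Hc as [Hc|[Hc|[Hc|[Hc|[]]]]]; subst c; unfold Fclip; simpl; fold u1 u2 u3 u4.
  - assert (Rabs (u1 * (1 - u1 - a1 * u2 - d1 * u3)) <= B * (1 + B + a1 * B + d1 * B)); [|lra].
    rewrite Rabs_mult. apply Rmult_le_compat; try apply Rabs_pos; auto. apply abs_competition_le; lra.
  - assert (Rabs (b2 * u2 * (1 - u2 - a2 * u1 - d2 * u4)) <= b2 * B * (1 + B + a2 * B + d2 * B)); [|lra].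
    rewrite Rabs_mult, Rabs_mult, (Rabs_right b2) by lra.
    apply Rmult_le_compat; [apply Rmult_le_pos; [lra|apply Rabs_pos]|apply Rabs_pos|
      apply Rmult_le_compat_l; lra|apply abs_competition_le; lra].
  - assert (Rabs (b3 * (u2 - u3)) <= 2 * b3 * B); [|lra].
    rewrite Rabs_mult, (Rabs_right b3) by lra.
    pose proof (Rabs_triang u2 (- u3)). rewrite Rabs_Ropp in *. unfold Rminus. nra.
  - assert (Rabs (b4 * (iext s - u4 - d4 * u4 * u2)) <= b4 * (Rabs iM + B + d4 * B * B)); [|lra].
    rewrite Rabs_mult, (Rabs_right b4) by lra. apply Rmult_le_compat_l; [lra|].
    replace (iext s - u4 - d4 * u4 * u2) with (iext s + - u4 + - (d4 * u4 * u2)) by ring.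
    eapply Rle_trans; [apply Rabs_triang3|].
    rewrite !Rabs_Ropp, !Rabs_mult, (Rabs_right d4), (Rabs_right (iext s)) by lra.
    assert (Rabs u4 * Rabs u2 <= B * B) by (apply Rmult_le_compat; auto; apply Rabs_pos).
    nra.
Qed.

Lemma Fclip_cont (X : R -> state) : (forall c, In c comps -> cont_everywhere (fun s => c (X s))) ->
  forall c, In c comps -> cont_everywhere (fun s => c (Fclip s (X s))).
Proof.
  intros HX c Hc s.
  assert (C : forall c, In c comps -> continuous (fun s => clip (c (X s))) s).
  { intros c' Hc'. apply (lim_comp (fun s => c' (X s)) clip); [apply HX; auto|].
    apply (continuous_of_lipschitz clip 1); [lra|]. intros; rewrite Rmult_1_l; apply clip_lipschitz. }
  pose proof (C c1 ltac:(simpl; auto)) as C1. pose proof (C c2 ltac:(simpl; auto)) as C2.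
  pose proof (C c3 ltac:(simpl; auto)) as C3. pose proof (C c4 ltac:(simpl; auto)) as C4.
  unfold continuous in *.
  assert (K : forall k : R, filterlim (fun _ : R => k) (locally s) (locally k)) by (intros; apply filterlim_const).
  simpl in Hc. destruct Hc as [Hc|[Hc|[Hc|[Hc|[]]]]]; subst c; unfold Fclip; simpl.
  - apply lim_mult; auto. repeat apply lim_minus; auto; apply lim_mult; auto.
  - apply lim_mult; [apply lim_mult; auto|]. repeat apply lim_minus; auto; apply lim_mult; auto.
  - apply lim_mult; [auto|]. apply lim_minus; auto.
  - apply lim_mult; [auto|]. repeat apply lim_minus; auto; [apply iext_cont|].
    apply lim_mult; [apply lim_mult|]; auto.
Qed.

Lemma is_sol_cont x t0 c : is_sol F t0 p_infty x -> In c comps ->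
  forall s, t0 < s -> continuous (fun s => c (x s)) s.
Proof.
  intros H Hc s Hs. apply (@ex_derive_continuous R_AbsRing R_NormedModule).
  eexists. apply (H c Hc); simpl; auto.
Qed.

Definition eta := radius / (2 * (decay_const + 1)).

Lemma eta_facts : 0 < gap -> 0 < eta /\ eta < radius /\
  forall d, 0 <= d -> d < eta -> decay_const * (d * d) <= (radius / 2) * (radius / 2).
Proof.
  intros Hg. destruct (decay_const_ge Hg) as [HS _]. pose proof (radius_pos ltac:(lra)) as Hr.
  assert (He : 0 < eta) by (unfold eta; apply Rdiv_lt_0_compat; lra).
  split; [exact He|split].
  - apply (Rmult_lt_reg_r (2 * (decay_const + 1))); [lra|].
    unfold eta, Rdiv. rewrite Rmult_assoc, Rinv_l, Rmult_1_r by lra. nra.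
  - intros d Hd0 Hd. assert (Hdd : d * (2 * (decay_const + 1)) < radius).
    { apply (Rmult_lt_compat_r (2 * (decay_const + 1))) in Hd; [|lra].
      unfold eta, Rdiv in Hd. rewrite Rmult_assoc, Rinv_l, Rmult_1_r in Hd by lra. exact Hd. }
    assert (0 <= d * (decay_const + 1)) by nra.
    assert ((d * (decay_const + 1)) * (d * (decay_const + 1)) <= (radius / 2) * (radius / 2))
      by (apply Rmult_le_compat; lra).
    assert (decay_const * (d * d) <= (d * (decay_const + 1)) * (d * (decay_const + 1))) by nra.
    lra.
Qed.

(* [x] need only solve [x' = F (t, x)] while it stays near [p]: this covers the Picard solutions
   of [Fclip]. *)
Lemma stays_near x t0 : 0 < gap -> 0 <= t0 ->
  (forall c, In c comps -> right_cont (fun s => c (x s)) t0) ->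
  (forall c, In c comps -> forall s, t0 < s -> continuous (fun s => c (x s)) s) ->
  (forall T, t0 <= T -> (forall s, t0 <= s <= T -> ndist (x s) (p s) <= radius) -> solves_on x t0 T) ->
  ndist (x t0) (p t0) < eta ->
  forall t, t0 <= t -> ndist (x t) (p t) <= radius / 2.
Proof.
  intros Hg Ht0 Hrc Hct Hsol Hd.
  destruct (eta_facts Hg) as [He [Her Hsmall]]. pose proof (radius_pos ltac:(lra)) as Hr.
  pose proof (ndist_nonneg (x t0) (p t0)) as Hd0.
  apply (continuity_bootstrap (fun s => ndist (x s) (p s)) t0 radius Hr).
  - apply ndist_p_cont; [apply Hrc|apply w_right_cont; auto].
  - intros s Hs. apply ndist_p_cont; [intros c Hc; apply Hct; auto|apply w_cont; lra].
  - lra.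
  - intros T HT Hnear s Hs.
    destruct (decay_all x t0 T Hg Ht0 (Hsol T HT Hnear) Hnear s Hs) as [E1 [E2 [E3 E4]]].
    destruct (rate_facts Hg) as [B0 _]. destruct (decay_const_ge Hg) as [HS _].
    assert (HE : exp (- rate * (s - t0)) <= 1) by (apply exp_le_1; nra).
    pose proof (exp_pos (- rate * (s - t0))). pose proof (Hsmall _ Hd0 Hd).
    pose proof (Rle_0_sqr (ndist (x t0) (p t0))). unfold Rsqr in *.
    assert (decay_const * (ndist (x t0) (p t0) * ndist (x t0) (p t0)) * exp (- rate * (s - t0))
            <= (radius / 2) * (radius / 2)) by nra.
    apply ndist_p_le_of_sqr; lra.
Qed.

Lemma ex_solution_near_p t0 x0 : 0 < gap -> 0 <= t0 -> ndist x0 (p t0) < eta ->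
  exists x, is_sol F t0 p_infty x /\ x t0 = x0.
Proof.
  intros Hg Ht0 Hd. destruct Fclip_consts_pos as [HL HM].
  destruct (ex_solution_of_lipschitz_bounded Fclip Fclip_lip Fclip_sup HL HM
              (fun c Hc s y z => Fclip_lipschitz c s y z Hc) (fun c Hc s y => Fclip_bounded c s y Hc)
              Fclip_cont t0 x0) as [X [HX0 [HXc HXd]]].
  pose proof radius_le. pose proof (radius_pos ltac:(lra)).
  assert (Hrc : forall c, In c comps -> right_cont (fun s => c (X s)) t0)
    by (intros c Hc; apply right_cont_of_continuous, HXc; auto).
  assert (Hnear : forall t, t0 <= t -> ndist (X t) (p t) <= radius / 2).
  { apply stays_near; auto.
    - intros c Hc s Hs. apply HXc; auto.
    - intros T HT Hnear. split; [|exact Hrc].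
      intros s Hs c Hc. rewrite <- Fclip_eq_F; [apply HXd; auto; lra|lra|].
      pose proof (Hnear s ltac:(lra)). lra.
    - rewrite HX0; auto. }
  exists X. split; auto. intros c Hc. split; [|apply Hrc; auto].
  intros t Ht _. rewrite <- Fclip_eq_F; [apply HXd; auto|lra|]. pose proof (Hnear t ltac:(lra)). lra.
Qed.

Lemma ndist_decay x t0 : 0 < gap -> 0 <= t0 -> is_sol F t0 p_infty x -> ndist (x t0) (p t0) < eta ->
  forall t e, t0 <= t -> 0 < e ->
  decay_const * (ndist (x t0) (p t0) * ndist (x t0) (p t0)) * exp (- rate * (t - t0)) < e * e ->
  ndist (x t) (p t) < e.
Proof.
  intros Hg Ht0 Hx Hd t e Ht He Hlt.
  assert (Hnear : forall s, t0 <= s -> ndist (x s) (p s) <= radius / 2).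
  { apply stays_near; auto.
    - intros c Hc. apply (Hx c Hc).
    - intros c Hc. apply is_sol_cont; auto.
    - intros T _ _. apply solves_on_of_is_sol, Hx. }
  pose proof (radius_pos ltac:(lra)).
  destruct (decay_all x t0 t Hg Ht0 (solves_on_of_is_sol x t0 t Hx) ltac:(intros s Hs; pose proof (Hnear s ltac:(lra)); lra) t ltac:(lra))
    as [E1 [E2 [E3 E4]]].
  apply ndist_p_lt_of_sqr; lra.
Qed.

Lemma unif_stable_p : 0 < gap -> unif_stable F p.
Proof.
  intros Hg eps Heps. destruct (eta_facts Hg) as [He _]. destruct (decay_const_ge Hg) as [HS _].
  destruct (rate_facts Hg) as [B0 _].
  exists (Rmin eta (eps / (decay_const + 1))). split; [apply Rmin_glb_lt; auto; apply Rdiv_lt_0_compat; lra|].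
  intros t0 Ht0 x0 Hx0.
  assert (Hx0e : ndist x0 (p t0) < eta) by (eapply Rlt_le_trans; [exact Hx0|apply Rmin_l]).
  assert (Hx0f : ndist x0 (p t0) * (decay_const + 1) < eps).
  { assert (ndist x0 (p t0) < eps / (decay_const + 1)) as H by (eapply Rlt_le_trans; [exact Hx0|apply Rmin_r]).
    apply (Rmult_lt_compat_r (decay_const + 1)) in H; [|lra].
    unfold Rdiv in H. rewrite Rmult_assoc, Rinv_l, Rmult_1_r in H by lra. exact H. }
  split; [apply ex_solution_near_p; auto|].
  intros x Hx <- t Ht. apply (ndist_decay x t0); auto.
  set (d := ndist (x t0) (p t0)) in *. pose proof (ndist_nonneg (x t0) (p t0)). fold d in H.
  assert (HE : exp (- rate * (t - t0)) <= 1) by (apply exp_le_1; nra).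
  pose proof (exp_pos (- rate * (t - t0))).
  assert (decay_const * (d * d) <= (d * (decay_const + 1)) * (d * (decay_const + 1))) by nra.
  assert (0 <= d * (decay_const + 1)) by nra.
  assert ((d * (decay_const + 1)) * (d * (decay_const + 1)) < eps * eps) by nra.
  assert (0 <= decay_const * (d * d)) by nra.
  assert (decay_const * (d * d) * exp (- rate * (t - t0)) <= decay_const * (d * d))
    by (rewrite <- (Rmult_1_r (decay_const * (d * d))) at 2; apply Rmult_le_compat_l; lra).
  lra.
Qed.

Lemma unif_attractive_p : 0 < gap -> forall eps, 0 < eps -> exists T, 0 < T /\
  forall t0, 0 <= t0 -> forall x, is_sol F t0 p_infty x -> ndist (x t0) (p t0) < eta ->
  forall t, t0 + T <= t -> ndist (x t) (p t) < eps.
Proof.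
  intros Hg eps Heps. destruct (eta_facts Hg) as [He _]. destruct (decay_const_ge Hg) as [HS _].
  destruct (rate_facts Hg) as [B0 _].
  set (A := decay_const * (eta * eta)). assert (HA : 0 <= A) by (unfold A; nra).
  set (q := eps * eps / (A + 1)). assert (Hq : 0 < q) by (unfold q; apply Rdiv_lt_0_compat; nra).
  assert (HT : 0 < (Rabs (ln q) + 1) / rate) by (apply Rdiv_lt_0_compat; [pose proof (Rabs_pos (ln q))|]; lra).
  exists ((Rabs (ln q) + 1) / rate). split; auto.
  intros t0 Ht0 x Hx Hxt0 t Ht. apply (ndist_decay x t0); auto; [lra|].
  set (d := ndist (x t0) (p t0)) in *. pose proof (ndist_nonneg (x t0) (p t0)). fold d in H.
  assert (Hlt : - rate * (t - t0) < ln q).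
  { assert (rate * (t - t0) >= rate * ((Rabs (ln q) + 1) / rate)) by (apply Rle_ge, Rmult_le_compat_l; lra).
    replace (rate * ((Rabs (ln q) + 1) / rate)) with (Rabs (ln q) + 1) in H0 by (field; lra).
    pose proof (Rle_abs (- ln q)). rewrite Rabs_Ropp in H1. lra. }
  assert (HE : exp (- rate * (t - t0)) < q) by (rewrite <- (exp_ln q) by auto; apply exp_increasing; auto).
  pose proof (exp_pos (- rate * (t - t0))).
  assert (decay_const * (d * d) <= A) by (unfold A; apply Rmult_le_compat_l; nra).
  assert (decay_const * (d * d) * exp (- rate * (t - t0)) <= A * q) by (apply Rmult_le_compat; nra).
  assert ((A + 1) * q = eps * eps) by (unfold q; field; lra). nra.
Qed.

Lemma unif_asym_stable_p : 0 < gap -> unif_asym_stable F p.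
Proof.
  intros Hg. destruct (eta_facts Hg) as [He _].
  split; [apply unif_stable_p; auto|].
  exists eta. split; [exact He|split; [intros; apply ex_solution_near_p; auto|]].
  apply unif_attractive_p; auto.
Qed.

Lemma sqr_u2_growth x t0 T : gap < 0 -> 0 <= t0 -> t0 <= T -> is_sol F t0 p_infty x ->
  (forall s, t0 <= s <= T -> ndist (x s) (p s) <= radius) ->
  c2 (x t0) * c2 (x t0) * exp (- (2 * weight_osc)) * exp (b2 * (- gap) * (T - t0)) <= c2 (x T) * c2 (x T).
Proof.
  intros Hg Ht0 HT Hx Hnear. pose proof radius_le.
  assert (Hsol := solves_on_of_is_sol x t0 T Hx).
  assert (HZ : weighted_u2 x t0 * exp (b2 * (- gap) * (T - t0)) <= weighted_u2 x T).
  { apply (exp_growth_of_derive_ge (weighted_u2 x) (fun s => 2 * b2 * weighted_u2 x s *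
        (- gap - c2 (x s) - a2 * (c1 (x s) - 1) + d2 * d4 * c4 (x s) * c2 (x s))) _ t0 T HT).
    - intros s Hs. apply (is_derive_weighted_u2 x t0 T s); auto.
    - intros s Hs.
      pose proof (rate_error_le (x s) s radius ltac:(lra) (Rle_refl _) (Hnear s ltac:(lra))) as He.
      rewrite (Rabs_left gap) in He by lra. apply Rabs_le_between in He.
      pose proof (weighted_u2_nonneg x s).
      apply Rle_trans with (2 * b2 * weighted_u2 x s * (- gap / 2)); [nra|apply Rmult_le_compat_l; nra].
    - apply (weighted_u2_right_cont x t0 T Hsol). }
  pose proof (weight_diff_le x t0 T Ht0 ltac:(lra) ltac:(pose proof (Hnear t0 ltac:(lra)); lra)
    ltac:(pose proof (Hnear T ltac:(lra)); lra)) as Hw.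
  apply Rabs_le_between in Hw.
  assert (HK : exp (- (2 * weight_osc)) <= exp (2 * weight x t0 + - (2 * weight x T))) by (apply exp_le_compat; lra).
  rewrite (sqr_u2_eq x T). unfold weighted_u2 in HZ |- *.
  pose proof (exp_pos (- (2 * weight x T))). pose proof (exp_pos (- (2 * weight_osc))).
  pose proof (exp_pos (b2 * - gap * (T - t0))). pose proof (Rle_0_sqr (c2 (x t0))). unfold Rsqr in *.
  eapply Rle_trans; [|apply Rmult_le_compat_r; [lra|exact HZ]].
  replace (c2 (x t0) * c2 (x t0) * exp (2 * weight x t0) * exp (b2 * - gap * (T - t0)) * exp (- (2 * weight x T)))
    with (c2 (x t0) * c2 (x t0) * exp (2 * weight x t0 + - (2 * weight x T)) * exp (b2 * - gap * (T - t0)))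
    by (rewrite exp_plus; ring).
  apply Rmult_le_compat_r; [lra|]. apply Rmult_le_compat_l; lra.
Qed.

(* Start on the [u2]-axis at distance [d0]: the linear lower bound [exp y >= 1 + y] on the growth
   forces [u2] out of the [radius]-neighbourhood by time [K]. *)
Lemma lyap_unstable_p : gap < 0 -> lyap_unstable F p.
Proof.
  intros Hg Hst. pose proof (radius_pos ltac:(lra)) as Hr. pose proof radius_le.
  destruct (Hst radius Hr 0 (Rle_refl 0)) as [delta [Hdel Hdd]].
  set (d0 := Rmin (delta / 2) (radius / 2)).
  assert (Hd0 : 0 < d0) by (unfold d0; apply Rmin_glb_lt; lra).
  assert (Hd0' : d0 < delta) by (unfold d0; eapply Rle_lt_trans; [apply Rmin_l|lra]).
  set (x0 := (1, d0, 0, w 0) : state).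
  assert (Hx0 : ndist x0 (p 0) < delta).
  { unfold ndist, x0, p; simpl. rewrite !Rminus_diag, Rminus_0_r, !Rabs_R0, (Rabs_right d0) by lra.
    rewrite (Rmax_right 0 d0), (Rmax_left 0 0), Rmax_left by lra. lra. }
  destruct (Hdd x0 Hx0) as [[x [Hx Hxt0]] Hall]. specialize (Hall x Hx Hxt0).
  set (a := b2 * (- gap)). assert (Ha : 0 < a) by (unfold a; apply Rmult_lt_0_compat; lra).
  set (K := radius * radius * exp (2 * weight_osc) / (d0 * d0 * a)).
  pose proof (exp_pos (2 * weight_osc)). pose proof (exp_pos (- (2 * weight_osc))).
  assert (HK : 0 <= K) by (unfold K; apply Rdiv_le_0_compat; [|apply Rmult_lt_0_compat]; nra).
  pose proof (sqr_u2_growth x 0 K Hg (Rle_refl 0) HK Hx ltac:(intros s Hs; left; apply Hall; lra)) as Hgrow.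
  rewrite Hxt0, Rminus_0_r in Hgrow. simpl c2 in Hgrow. fold a in Hgrow.
  assert (E : exp (a * K) >= 1 + a * K) by (apply Rle_ge, exp_ineq1_le).
  assert (Hinv : exp (2 * weight_osc) * exp (- (2 * weight_osc)) = 1)
    by (rewrite <- exp_plus; replace (2 * weight_osc + - (2 * weight_osc)) with 0 by ring; apply exp_0).
  assert (HaK : d0 * d0 * exp (- (2 * weight_osc)) * (a * K) = radius * radius).
  { unfold K.
    replace (d0 * d0 * exp (- (2 * weight_osc)) * (a * (radius * radius * exp (2 * weight_osc) / (d0 * d0 * a))))
      with (radius * radius * (exp (2 * weight_osc) * exp (- (2 * weight_osc)))) by (field; nra).
    rewrite Hinv. ring. }
  assert (Hlow : radius * radius < c2 (x K) * c2 (x K)).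
  { eapply Rlt_le_trans; [|exact Hgrow].
    assert (0 < d0 * d0 * exp (- (2 * weight_osc))) by (apply Rmult_lt_0_compat; nra).
    nra. }
  destruct (ndist_p_le (x K) K radius ltac:(left; apply Hall; auto)) as [_ [H2 _]].
  apply sqr_le_of_abs_le in H2. lra.
Qed.
End Model.

Theorem mainTheorem5 :
  forall (a1 a2 b2 b3 b4 d1 d2 d4 rho iM : R) (i w : R -> R),
    0 < a1 -> 0 < a2 -> 0 < b2 -> 0 < b3 -> 0 < b4 ->
    0 < d1 -> 0 < d2 -> 0 < d4 -> 0 < rho ->
    (forall t, 0 <= t ->
       filterlim i (within (fun s => 0 <= s) (locally t)) (locally (i t))) ->
    (forall t, 0 <= t -> 0 <= i t <= iM) ->
    (forall t, 0 <= t -> i (t + rho) = i t) ->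
    RInt i 0 rho / rho = 1 ->
    (forall t, 0 < t -> is_derive w t (b4 * (i t - w t))) ->
    (forall t, 0 <= t -> w (t + rho) = w t) ->
    let F := sysF a1 a2 b2 b3 b4 d1 d2 d4 i in
    let p := fun t : R => (1, 0, 0, w t) in
    is_sol F 0 p_infty p /\
    (forall t, 0 <= t -> p (t + rho) = p t) /\
    (a2 + d2 > 1 -> unif_asym_stable F p) /\
    (a2 + d2 < 1 -> lyap_unstable F p).
Proof.
  intros a1 a2 b2 b3 b4 d1 d2 d4 rho iM i w Ha1 Ha2 Hb2 Hb3 Hb4 Hd1 Hd2 Hd4 Hrho
    Hi_cont Hi_bound Hi_per Hi_mean Hw_derive Hw_per F p.
  split; [|split; [|split]].
  - eapply p_sol; eassumption.
  - intros t Ht. eapply p_periodic; eassumption.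
  - intros Hgt. eapply unif_asym_stable_p; try eassumption. unfold gap. lra.
  - intros Hlt. eapply lyap_unstable_p; try eassumption. unfold gap. lra.
Qed.
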